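(* For every linkage $\mathcal{L}=(G,\ell)$, the annotation map $\mathrm{Annot}_{\mathcal{L}}:(\mathbb{R}^2)^{V}\to(\mathbb{R}^2)^{V}\times\mathbb{R}^{E\times E}$ is injective, semi-algebraic, and continuous on the set of nontouching configurations of linkages $\epsilon$-related to $\mathcal L$ (for any $\epsilon\ge0$), i.e. on $\bigcup_{\epsilon\ge 0}\mathrm{NConf}_\epsilon(\mathcal L)$.
   Context: A linkage is a pair $\mathcal L=(G,\ell)$ with $G=(V,E)$ a finite graph and $\ell:E\to\mathbb R_{\ge0}$ (edges are called bars; zero lengths are allowed). A configuration of $\mathcal L$ is a map $C:V\to\mathbb R^2$ with $|C(v)-C(w)|=\ell(v,w)$ for every bar $(v,w)$. Two linkages $(G_1,\ell_1),(G_2,\ell_2)$ are $\epsilon$-related if $G_1=G_2$ and $|\ell_1(e)-\ell_2(e)|\le\epsilon$ for all edges $e$. A configuration $C$ of a linkage $\mathcal L'=(G,\ell')$ is nontouching if no two bars intersect except at endpoints, and two vertices have the same position if and only if they are joined in $G$ by a path of bars of $\ell'$-length zero (vertices joined by such a path are regarded as merged into one vertex, so bars incident to them may meet at that common point). $\mathrm{NConf}_\epsilon(\mathcal L)$ denotes the set of nontouching configurations of linkages $\epsilon$-related to $\mathcal L$ (as maps $V\to\mathbb R^2$). Order function: for oriented segments $e_1,e_2$, in coordinates where $e_1$ runs from $(0,0)$ to $(l,0)$, let $d_\pm(e_1,e_2)=\mathrm{len}\{x\in[0,l]:\exists y,\ \pm y\ge 0,\ (x,y)\in e_2\}$ and $\mathrm{Ord}(e_1,e_2)=d_+-d_-$.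 Each edge is given a fixed canonical orientation; for $e=(u,v)$ write $C(e)$ for the oriented segment from $C(u)$ to $C(v)$. The annotation map is $\mathrm{Annot}_{\mathcal L}(C)=(C,A)$ where $A_{i,j}=\mathrm{Ord}(C(e_i),C(e_j))$ for $e_i,e_j\in E$. *)

From Stdlib Require Import Reals Lra List Relations ClassicalEpsilon.
Open Scope R_scope.

Definition pt := (R * R)%type.

Definition dist (p q : pt) : R :=
  sqrt ((fst q - fst p)^2 + (snd q - snd p)^2).

Definition on_seg (a b z : pt) : Prop :=
  exists t, 0 <= t <= 1 /\
    fst z = fst a + t * (fst b - fst a) /\ snd z = snd a + t * (snd b - snd a).

(** * Length of a subset of R.
    The sets to which [len] is applied below are intervals (projections of
    convex sets), whose Lebesgue measure is their diameter sup - inf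
    (and 0 when empty).  *)
Definition is_inf (S : R -> Prop) (a : R) : Prop :=
  (forall x, S x -> a <= x) /\ (forall a', (forall x, S x -> a' <= x) -> a' <= a).
Definition is_sup (S : R -> Prop) (b : R) : Prop :=
  (forall x, S x -> x <= b) /\ (forall b', (forall x, S x -> x <= b') -> b <= b').
Definition is_len (S : R -> Prop) (r : R) : Prop :=
  ((forall x, ~ S x) /\ r = 0) \/
  (exists a b, is_inf S a /\ is_sup S b /\ r = b - a).
Definition len (S : R -> Prop) : R := epsilon (inhabits 0) (is_len S).

(** * Order function.
    Coordinates in which e1 = [p,q] runs from (0,0) to (l,0), l = |q-p|:
    X z = (z-p).u, Y z = u x (z-p), with u = (q-p)/l. *)
Definition ord_X (p q z : pt) : R :=
  let l := dist p q in
  (fst z - fst p) * ((fst q - fst p) / l) + (snd z - snd p) * ((snd q - snd p) / l).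
Definition ord_Y (p q z : pt) : R :=
  let l := dist p q in
  ((fst q - fst p) / l) * (snd z - snd p) - ((snd q - snd p) / l) * (fst z - fst p).

(** d_+ (sgn = 1) and d_- (sgn = -1) *)
Definition d_pm (sgn : R) (e1 e2 : pt * pt) : R :=
  let (p, q) := e1 in let (a, b) := e2 in
  len (fun x => 0 <= x <= dist p q /\
         exists z, on_seg a b z /\ ord_X p q z = x /\ sgn * ord_Y p q z >= 0).

Definition Ord (e1 e2 : pt * pt) : R := d_pm 1 e1 e2 - d_pm (-1) e1 e2.

(** Vertices are 0..n-1; edges are a list [E] of ordered pairs (u,v) (the
    pair order is the canonical orientation); edge i is [nth i E (0,0)];
    lengths are given by a function on edge indices. *)
Definition edge (E : list (nat * nat)) (i : nat) : nat * nat := nth i E (0%nat, 0%nat).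

Definition simple_graph (n : nat) (E : list (nat * nat)) : Prop :=
  NoDup E /\
  (forall u v, In (u, v) E -> (u < n)%nat /\ (v < n)%nat /\ u <> v /\ ~ In (v, u) E).

Definition Cseg (C : nat -> pt) (e : nat * nat) : pt * pt := (C (fst e), C (snd e)).

Definition is_config (E : list (nat * nat)) (l : nat -> R) (C : nat -> pt) : Prop :=
  forall i, (i < length E)%nat -> dist (C (fst (edge E i))) (C (snd (edge E i))) = l i.

Definition zero_adj (E : list (nat * nat)) (l : nat -> R) (x y : nat) : Prop :=
  exists i, (i < length E)%nat /\ l i = 0 /\
    ((fst (edge E i) = x /\ snd (edge E i) = y) \/ (fst (edge E i) = y /\ snd (edge E i) = x)).
Definition merged E l : relation nat := clos_refl_trans nat (zero_adj E l).

Definition nontouching (n : nat) (E : list (nat * nat)) (l : nat -> R) (C : nat -> pt) : Prop :=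
  (forall i j z, (i < length E)%nat -> (j < length E)%nat -> i <> j ->
     on_seg (C (fst (edge E i))) (C (snd (edge E i))) z ->
     on_seg (C (fst (edge E j))) (C (snd (edge E j))) z ->
     (z = C (fst (edge E i)) \/ z = C (snd (edge E i))) /\
     (z = C (fst (edge E j)) \/ z = C (snd (edge E j)))) /\
  (forall x y, (x < n)%nat -> (y < n)%nat -> (C x = C y <-> merged E l x y)).

Definition eps_related (E : list (nat * nat)) (eps : R) (l l' : nat -> R) : Prop :=
  forall i, (i < length E)%nat -> Rabs (l' i - l i) <= eps.

Definition NConf (n : nat) (E : list (nat * nat)) (l : nat -> R) (eps : R) (C : nat -> pt) : Prop :=
  exists l', (forall i, (i < length E)%nat -> 0 <= l' i) /\ eps_related E eps l l' /\
             is_config E l' C /\ nontouching n E l' C.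

Definition NConf_all n E l (C : nat -> pt) : Prop := exists eps, 0 <= eps /\ NConf n E l eps C.

Definition AnnotA (E : list (nat * nat)) (C : nat -> pt) (i j : nat) : R :=
  Ord (Cseg C (edge E i)) (Cseg C (edge E j)).

(** * Semi-algebraic sets in R^k (points are [nat -> R], coordinates 0..k-1). *)
Inductive rpoly : Type :=
| PVar : nat -> rpoly
| PConst : R -> rpoly
| PAdd : rpoly -> rpoly -> rpoly
| PMul : rpoly -> rpoly -> rpoly
| POpp : rpoly -> rpoly.

Fixpoint peval (x : nat -> R) (p : rpoly) : R :=
  match p with
  | PVar i => x i | PConst c => c
  | PAdd p q => peval x p + peval x q
  | PMul p q => peval x p * peval x q
  | POpp p => - peval x p
  end.

Fixpoint pvars_lt (k : nat) (p : rpoly) : Prop :=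
  match p with
  | PVar i => (i < k)%nat | PConst _ => True
  | PAdd p q | PMul p q => pvars_lt k p /\ pvars_lt k q
  | POpp p => pvars_lt k p
  end.

Inductive qf : Type :=
| FEq0 : rpoly -> qf
| FPos : rpoly -> qf
| FAnd : qf -> qf -> qf
| FOr : qf -> qf -> qf
| FNot : qf -> qf.

Fixpoint qeval (x : nat -> R) (f : qf) : Prop :=
  match f with
  | FEq0 p => peval x p = 0
  | FPos p => peval x p > 0
  | FAnd f g => qeval x f /\ qeval x g
  | FOr f g => qeval x f \/ qeval x g
  | FNot f => ~ qeval x f
  end.

Fixpoint qvars_lt (k : nat) (f : qf) : Prop :=
  match f with
  | FEq0 p | FPos p => pvars_lt k p
  | FAnd f g | FOr f g => qvars_lt k f /\ qvars_lt k g
  | FNot f => qvars_lt k f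
  end.

Definition semialgebraic (k : nat) (P : (nat -> R) -> Prop) : Prop :=
  exists f, qvars_lt k f /\ forall x, P x <-> qeval x f.

(** Graph of Annot restricted to NConf_all, as a subset of
    R^{2n} x R^{2n} x R^{m*m}: coordinates 2v,2v+1 = C(v);
    2n+2v, 2n+2v+1 = first output component; 4n + i*m + j = A_{i,j}. *)
Definition Annot_graph (n : nat) (E : list (nat * nat)) (l : nat -> R) (z : nat -> R) : Prop :=
  let m := length E in
  let C := fun v => (z (2 * v)%nat, z (2 * v + 1)%nat) in
  NConf_all n E l C /\
  (forall v, (v < n)%nat -> z (2 * n + 2 * v)%nat = fst (C v) /\ z (2 * n + 2 * v + 1)%nat = snd (C v)) /\
  (forall i j, (i < m)%nat -> (j < m)%nat -> z (4 * n + i * m + j)%nat = AnnotA E C i j).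

From Pilot Require Import Defs.
From Stdlib Require Import Reals Lra Lia List Relations Classical ClassicalEpsilon
  FunctionalExtensionality PropExtensionality.
Open Scope R_scope.

(** Injectivity is immediate: Annot records the configuration itself.  The
    content lies in the matrix part, and both remaining properties rest on a
    closed form of the order function for two bars that meet at most at common
    endpoints (which is the case for distinct bars of a nontouching configuration).
    In the frame of the first bar, of length l, the second bar projects onto an
    interval of length [proj_len]; being unable to cross the first bar, it lies on
    one side of it, given by the sign of a polynomial [side_det]; and
    Ord = sign(side_det) * proj_len / l ([Ord_closed_form]).

    - Continuity: proj_len and side_det are continuous, the sign is locally
      constant where proj_len > 0, and |Ord| <= l handles degenerate first bars.
    - Semi-algebraicity: a map lies in some NConf_eps iff it is nontouching for
      its own bar lengths; "touching only at endpoints" is turned into an explicit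
      quantifier-free formula, the merging condition depends only on finitely many
      polynomial atoms, and the graph of the closed form of Ord is described by
      piecewise polynomials. *)


Lemma len_ext (S T : R -> Prop) : (forall x, S x <-> T x) -> len S = len T.
Proof.
  intro H. assert (S = T) as ->; [|reflexivity].
  apply functional_extensionality; intro x; apply propositional_extensionality; auto.
Qed.

Lemma len_interval (S : R -> Prop) u v :
  u <= v -> (forall x, S x <-> u <= x <= v) -> len S = v - u.
Proof.
  intros Huv HS. rewrite (len_ext S (fun x => u <= x <= v) HS).
  assert (Hlen : is_len (fun x => u <= x <= v) (len (fun x => u <= x <= v))).
  { unfold len. apply epsilon_spec. exists (v - u). right. exists u, v.
    repeat split; intros; try lra; match goal with H : _ |- _ => apply H; lra end. }
  destruct Hlen as [[Hempty _]|(a & b & [Ha1 Ha2] & [Hb1 Hb2] & ->)].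
  - exfalso; apply (Hempty u); lra.
  - assert (a <= u) by (apply Ha1; lra). assert (u <= a) by (apply Ha2; intros; lra).
    assert (v <= b) by (apply Hb1; lra). assert (b <= v) by (apply Hb2; intros; lra).
    lra.
Qed.

Lemma len_subsingleton (S : R -> Prop) c : (forall x, S x -> x = c) -> len S = 0.
Proof.
  intro H. destruct (classic (S c)) as [Hc|Hc].
  - replace 0 with (c - c) by ring. apply len_interval; [lra|].
    intro x; split; intro Hx; [apply H in Hx; lra|].
    replace x with c by lra. exact Hc.
  - assert (Hlen : is_len S (len S)) by (unfold len; apply epsilon_spec; exists 0; left;
      split; [intros x Hx; apply Hc; rewrite <- (H x Hx); exact Hx|reflexivity]).
    destruct Hlen as [[_ H0]|(a & b & [_ Ha] & _ & _)]; [exact H0|].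
    assert (a + 1 <= a) by (apply Ha; intros x Hx; exfalso; apply Hc; rewrite <- (H x Hx); exact Hx).
    lra.
Qed.

(** * The frame of a bar
    For a bar [p,q], [frameX p q z] and [frameY p q z] are the coordinates of z in
    the frame of the bar, scaled by |q - p| to keep them polynomial, and
    [sqlen p q] = |q - p|^2.  In these coordinates the bar runs from (0,0) to
    (sqlen p q, 0). *)
Definition sqlen (p q : pt) := (fst q - fst p)*(fst q - fst p) + (snd q - snd p)*(snd q - snd p).
Definition frameX (p q z : pt) := (fst z - fst p)*(fst q - fst p) + (snd z - snd p)*(snd q - snd p).
Definition frameY (p q z : pt) := (fst q - fst p)*(snd z - snd p) - (snd q - snd p)*(fst z - fst p).

Lemma sqlen_nonneg p q : 0 <= sqlen p q.
Proof. unfold sqlen. pose proof (Rle_0_sqr (fst q - fst p)); pose proof (Rle_0_sqr (snd q - snd p)).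
  unfold Rsqr in *; lra. Qed.

Lemma sqlen_zero p q : sqlen p q = 0 -> fst q - fst p = 0 /\ snd q - snd p = 0.
Proof.
  unfold sqlen. intro H. pose proof (Rle_0_sqr (fst q - fst p)); pose proof (Rle_0_sqr (snd q - snd p)).
  unfold Rsqr in *. split; nra.
Qed.

Lemma dist_sqlen p q : Defs.dist p q = sqrt (sqlen p q).
Proof. unfold Defs.dist, sqlen. f_equal. ring. Qed.

Lemma ord_X_frame p q z : ord_X p q z = frameX p q z / Defs.dist p q.
Proof. unfold ord_X, frameX, Rdiv. ring. Qed.

Lemma ord_Y_frame p q z : ord_Y p q z = frameY p q z / Defs.dist p q.
Proof. unfold ord_Y, frameY, Rdiv. ring. Qed.

Lemma frame_p p q : frameX p q p = 0 /\ frameY p q p = 0.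
Proof. unfold frameX, frameY. split; ring. Qed.

Lemma frame_q p q : frameX p q q = sqlen p q /\ frameY p q q = 0.
Proof. unfold frameX, frameY, sqlen. split; ring. Qed.

Lemma frame_affine p q a b z t :
  fst z = fst a + t * (fst b - fst a) -> snd z = snd a + t * (snd b - snd a) ->
  frameX p q z = frameX p q a + t * (frameX p q b - frameX p q a) /\
  frameY p q z = frameY p q a + t * (frameY p q b - frameY p q a).
Proof. intros H1 H2. unfold frameX, frameY. rewrite H1, H2. split; ring. Qed.

Lemma frame_inj p q z z' : sqlen p q > 0 ->
  frameX p q z = frameX p q z' -> frameY p q z = frameY p q z' -> z = z'.
Proof.
  intros HQ HX HY. destruct z as [x y], z' as [x' y'].
  assert (Hx : sqlen p q * (x - x') =
    (frameX p q (x, y) - frameX p q (x', y')) * (fst q - fst p)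
    - (frameY p q (x, y) - frameY p q (x', y')) * (snd q - snd p))
    by (unfold sqlen, frameX, frameY; simpl; ring).
  assert (Hy : sqlen p q * (y - y') =
    (frameX p q (x, y) - frameX p q (x', y')) * (snd q - snd p)
    + (frameY p q (x, y) - frameY p q (x', y')) * (fst q - fst p))
    by (unfold sqlen, frameX, frameY; simpl; ring).
  rewrite HX, HY, !Rminus_diag, !Rmult_0_l, Rminus_0_r in Hx. rewrite HX, HY, !Rminus_diag, !Rmult_0_l, Rplus_0_r in Hy.
  apply Rmult_integral in Hx, Hy. f_equal; lra.
Qed.

Lemma on_seg_frame p q z : sqlen p q > 0 ->
  (on_seg p q z <-> frameY p q z = 0 /\ 0 <= frameX p q z <= sqlen p q).
Proof.
  intro HQ. split.
  - intros (t & Ht & Hx & Hy).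
    destruct (frame_affine p q p q z t Hx Hy) as [EX EY].
    destruct (frame_p p q) as [Xp Yp]. destruct (frame_q p q) as [Xq Yq].
    rewrite EX, EY, Xp, Yp, Xq, Yq. split; [ring|]. split; nra.
  - intros [HY [HX1 HX2]]. set (t := frameX p q z / sqlen p q).
    assert (Ht : 0 <= t <= 1).
    { unfold t. split; [unfold Rdiv; apply Rmult_le_pos; [lra|left; apply Rinv_0_lt_compat; lra]|].
      apply Rmult_le_reg_r with (sqlen p q); [lra|]. field_simplify; lra. }
    exists t. split; [exact Ht|].
    set (z' := (fst p + t * (fst q - fst p), snd p + t * (snd q - snd p))).
    destruct (frame_affine p q p q z' t eq_refl eq_refl) as [EX EY].
    destruct (frame_p p q) as [Xp Yp]. destruct (frame_q p q) as [Xq Yq].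
    assert (Hz : z = z').
    { apply (frame_inj p q); auto.
      - rewrite EX, Xp, Xq. unfold t. field. lra.
      - rewrite EY, Yp, Yq, HY. ring. }
    rewrite Hz. split; reflexivity.
Qed.

(** Two bars meet at most in common endpoints: the pairwise content of [nontouching]. *)
Definition touch_at_ends (p q a b : pt) : Prop := forall z, on_seg p q z -> on_seg a b z ->
  (z = p \/ z = q) /\ (z = a \/ z = b).

Lemma touch_at_ends_sym p q a b : touch_at_ends p q a b <-> touch_at_ends a b p q.
Proof. unfold touch_at_ends. split; intros H z H1 H2; destruct (H z H2 H1); auto. Qed.

(** [touch_at_ends] read in the frame of the first bar, which is the segment
    Y = 0, 0 <= X <= Q; the second bar is parametrised by t in [0,1]. *)
Definition frame_touch (Xa Xb Ya Yb Q : R) : Prop :=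
  forall t, 0 <= t <= 1 -> Ya + t*(Yb-Ya) = 0 -> 0 <= Xa + t*(Xb-Xa) <= Q ->
  (Xa + t*(Xb-Xa) = 0 \/ Xa + t*(Xb-Xa) = Q) /\
  ((t*(Xb-Xa) = 0 /\ t*(Yb-Ya) = 0) \/ ((t-1)*(Xb-Xa) = 0 /\ (t-1)*(Yb-Ya) = 0)).

Definition frame_touch_of (p q a b : pt) : Prop :=
  frame_touch (frameX p q a) (frameX p q b) (frameY p q a) (frameY p q b) (sqlen p q).

Lemma touch_at_ends_frame p q a b : sqlen p q > 0 ->
  (touch_at_ends p q a b <-> frame_touch_of p q a b).
Proof.
  intro HQ. destruct (frame_p p q) as [Xp Yp]. destruct (frame_q p q) as [Xq Yq].
  unfold frame_touch_of. split.
  - intros HT t Ht Hy HX.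
    set (z := (fst a + t*(fst b - fst a), snd a + t*(snd b - snd a))).
    destruct (frame_affine p q a b z t eq_refl eq_refl) as [EX EY].
    assert (Hab : on_seg a b z) by (exists t; auto).
    assert (Hpq : on_seg p q z) by (apply on_seg_frame; auto; rewrite EX, EY; auto).
    destruct (HT z Hpq Hab) as [Hend1 Hend2]. split.
    + destruct Hend1 as [Hz|Hz]; [left|right]; rewrite <- EX, Hz; tauto.
    + destruct Hend2 as [Hz|Hz]; [left|right]; rewrite Hz in EX, EY; split; lra.
  - intros HF z Hpq (t & Ht & Hzx & Hzy).
    destruct (frame_affine p q a b z t Hzx Hzy) as [EX EY].
    apply on_seg_frame in Hpq; auto. rewrite EX, EY in Hpq. destruct Hpq as [Hy HX].
    destruct (HF t Ht Hy HX) as [Hend1 Hend2]. split.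
    + destruct Hend1; [left|right]; apply (frame_inj p q); auto; lra.
    + destruct Hend2 as [[H1 H2]|[H1 H2]]; [left|right]; apply (frame_inj p q); auto; lra.
Qed.

Lemma on_seg_degenerate p q z : sqlen p q = 0 -> on_seg p q z -> z = p.
Proof.
  intros HQ (t & _ & Hx & Hy). destruct (sqlen_zero p q HQ) as [A B].
  rewrite A in Hx. rewrite B in Hy. destruct z, p; simpl in *. f_equal; lra.
Qed.

Lemma touch_at_ends_cases p q a b : touch_at_ends p q a b <->
  (sqlen p q > 0 /\ frame_touch_of p q a b) \/
  (sqlen p q = 0 /\ sqlen a b > 0 /\ frame_touch_of a b p q) \/
  (sqlen p q = 0 /\ sqlen a b = 0).
Proof.
  pose proof (sqlen_nonneg p q). pose proof (sqlen_nonneg a b). split.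
  - intro HT. destruct (Req_dec (sqlen p q) 0) as [Z1|Z1].
    + destruct (Req_dec (sqlen a b) 0) as [Z2|Z2]; [right; right; auto|].
      right; left. split; [exact Z1|split; [lra|]].
      apply touch_at_ends_frame; [lra|]. apply touch_at_ends_sym; auto.
    + left. split; [lra|]. apply touch_at_ends_frame; auto; lra.
  - intros [[A B]|[[A [B C]]|[A B]]].
    + apply touch_at_ends_frame; auto.
    + apply touch_at_ends_sym, touch_at_ends_frame; auto.
    + intros z H1 H2. apply on_seg_degenerate in H1; [|exact A].
      apply on_seg_degenerate in H2; [|exact B]. split; left; assumption.
Qed.

(** * A closed form for the order function

    Let the first bar have length l > 0 and describe the second bar in the scaled
    frame of the first by its endpoints (Xa,Ya) and (Xb,Yb); the first bar is then
    Y = 0, 0 <= X <= l*l.  The part of the first bar lying under the second one is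
    [proj_lo, proj_hi], of length [proj_len].  A second bar that does not cross the
    first stays on one side of it, and that side is the sign of [side_det], a
    positive multiple of the ordinate of the second bar above the midpoint of
    [proj_lo, proj_hi].  Hence Ord = sign(side_det) * proj_len / l. *)
Definition proj_lo (Xa Xb : R) : R := Rmax (Rmin Xa Xb) 0.
Definition proj_hi (Xa Xb Q : R) : R := Rmin (Rmax Xa Xb) Q.
Definition proj_len (Xa Xb Q : R) : R := Rmax 0 (proj_hi Xa Xb Q - proj_lo Xa Xb).
Definition side_det (Xa Xb Ya Yb Q : R) : R :=
  (2*Ya*(Xb-Xa) + (proj_lo Xa Xb + proj_hi Xa Xb Q - 2*Xa)*(Yb-Ya))*(Xb-Xa).
Definition signum (x : R) : R := if Rlt_dec 0 x then 1 else if Rlt_dec x 0 then -1 else 0.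
Definition ord_formula (Xa Xb Ya Yb Q : R) : R :=
  signum (side_det Xa Xb Ya Yb Q) * proj_len Xa Xb Q / sqrt Q.

(** d_+ (s = 1) and d_- (s = -1), scaled by l, in terms of the frame data. *)
Definition side_len (Xa Xb Ya Yb l s : R) : R :=
  len (fun x => 0 <= x <= l /\ exists t, 0 <= t <= 1 /\
         Xa + t*(Xb-Xa) = x*l /\ s*(Ya + t*(Yb-Ya)) >= 0).

Definition no_crossing (Xa Xb Ya Yb Q : R) : Prop :=
  forall t, 0 <= t <= 1 -> Ya + t*(Yb-Ya) = 0 -> 0 <= Xa + t*(Xb-Xa) <= Q ->
  t*(Xb-Xa) = 0 \/ (t-1)*(Xb-Xa) = 0.

Lemma frame_touch_no_crossing Xa Xb Ya Yb Q :
  frame_touch Xa Xb Ya Yb Q -> no_crossing Xa Xb Ya Yb Q.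
Proof. intros H t Ht Hy HX. destruct (H t Ht Hy HX) as [_ [[A _]|[A _]]]; auto. Qed.

Lemma signum_pos x : x > 0 -> signum x = 1.
Proof. intro; unfold signum; destruct Rlt_dec; lra. Qed.

Lemma signum_neg x : x < 0 -> signum x = -1.
Proof. intro; unfold signum; destruct Rlt_dec; [lra|]; destruct Rlt_dec; lra. Qed.

Lemma signum_bound x : Rabs (signum x) <= 1.
Proof. unfold signum. repeat destruct Rlt_dec; unfold Rabs; destruct Rcase_abs; lra. Qed.

Lemma proj_len_bounds Xa Xb Q : 0 <= Q -> 0 <= proj_len Xa Xb Q <= Q.
Proof. intro. unfold proj_len, proj_hi, proj_lo, Rmin, Rmax. repeat destruct Rle_dec; lra. Qed.

Lemma proj_len_zero Xa Xb : proj_len Xa Xb 0 = 0.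
Proof. unfold proj_len, proj_hi, proj_lo, Rmin, Rmax. repeat destruct Rle_dec; lra. Qed.

Lemma proj_range Xa Xb Q v : 0 <= Q ->
  ((Rmin Xa Xb <= v <= Rmax Xa Xb /\ 0 <= v <= Q) <-> proj_lo Xa Xb <= v <= proj_hi Xa Xb Q).
Proof. intro. unfold proj_lo, proj_hi, Rmin, Rmax. repeat destruct Rle_dec; split; lra. Qed.

Lemma affine_between Xa Xb t : 0 <= t <= 1 -> Rmin Xa Xb <= Xa + t*(Xb-Xa) <= Rmax Xa Xb.
Proof. intro. unfold Rmin, Rmax. destruct Rle_dec; split; nra. Qed.

Lemma between_param Xa Xb t : Xb <> Xa ->
  Rmin Xa Xb <= Xa + t*(Xb-Xa) <= Rmax Xa Xb -> 0 <= t <= 1.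
Proof. intros HD. unfold Rmin, Rmax. destruct Rle_dec; intros; split; nra. Qed.

Lemma strictly_between_param Xa Xb t :
  Rmin Xa Xb < Xa + t*(Xb-Xa) < Rmax Xa Xb -> 0 < t < 1.
Proof. unfold Rmin, Rmax. destruct Rle_dec; intros; split; nra. Qed.

Lemma len_scaled (S : R -> Prop) l u v : l > 0 -> u <= v ->
  (forall x, S x <-> u <= x*l <= v) -> len S = (v - u) / l.
Proof.
  intros Hl Huv HS. replace ((v - u)/l) with (v/l - u/l) by (field; lra).
  apply len_interval.
  - apply Rmult_le_compat_r; [left; apply Rinv_0_lt_compat|]; lra.
  - intro x. rewrite HS.
    assert (Hx : x = (x*l)/l) by (field; lra).
    split; intros [H1 H2]; split.
    + rewrite Hx. apply Rmult_le_compat_r; [left; apply Rinv_0_lt_compat|]; lra.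
    + rewrite Hx. apply Rmult_le_compat_r; [left; apply Rinv_0_lt_compat|]; lra.
    + apply Rmult_le_compat_r with (r := l) in H1; [|lra].
      unfold Rdiv in H1. rewrite Rmult_assoc, Rinv_l in H1 by lra. lra.
    + apply Rmult_le_compat_r with (r := l) in H2; [|lra].
      unfold Rdiv in H2. rewrite Rmult_assoc, Rinv_l in H2 by lra. lra.
Qed.

Section FrameData.
Variables Xa Xb Ya Yb l : R.
Hypothesis Hl : l > 0.

Lemma side_set_proj s x :
  (0 <= x <= l /\ exists t, 0 <= t <= 1 /\ Xa + t*(Xb-Xa) = x*l /\ s*(Ya + t*(Yb-Ya)) >= 0) ->
  proj_lo Xa Xb <= x*l <= proj_hi Xa Xb (l*l).
Proof.
  intros [Hx (t & Ht & HX & _)]. apply proj_range; [nra|].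
  rewrite <- HX. split; [apply affine_between; exact Ht|]. rewrite HX. split; nra.
Qed.

Lemma side_len_flat s : proj_len Xa Xb (l*l) <= 0 -> side_len Xa Xb Ya Yb l s = 0.
Proof.
  intro HP. unfold side_len. apply len_subsingleton with (c := proj_lo Xa Xb / l).
  intros x Hx. apply side_set_proj in Hx.
  assert (proj_hi Xa Xb (l*l) <= proj_lo Xa Xb) by (unfold proj_len, Rmax in HP; destruct Rle_dec; lra).
  replace x with (x*l/l) by (field; lra). f_equal. lra.
Qed.

Section NontrivialProjection.
Hypothesis HNC : no_crossing Xa Xb Ya Yb (l*l).
Hypothesis HP : 0 < proj_len Xa Xb (l*l).
Let lo := proj_lo Xa Xb.
Let hi := proj_hi Xa Xb (l*l).
Let D := Xb - Xa.
Let xm := (lo + hi)/2.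
Let tm := (xm - Xa)/D.
Let ym := Ya + tm*(Yb-Ya).

Lemma lo_lt_hi : lo < hi /\ proj_len Xa Xb (l*l) = hi - lo.
Proof. unfold proj_len, Rmax in HP |- *. fold lo hi in HP |- *. destruct Rle_dec; lra. Qed.

Lemma D_nonzero : D <> 0.
Proof.
  destruct lo_lt_hi as [H _]. intro HD. unfold D in HD. subst lo hi.
  replace Xb with Xa in H by lra. unfold proj_lo, proj_hi, Rmin, Rmax in H.
  repeat destruct Rle_dec; lra.
Qed.

Lemma midpoint_props : 0 < tm < 1 /\ Xa + tm*(Xb-Xa) = xm /\ 0 < xm < l*l.
Proof.
  destruct lo_lt_hi as [H _]. pose proof D_nonzero as HD.
  assert (Hlo : 0 <= lo /\ Rmin Xa Xb <= lo) by (subst lo; unfold proj_lo, Rmax; destruct Rle_dec; lra).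
  assert (Hhi : hi <= l*l /\ hi <= Rmax Xa Xb) by (subst hi; unfold proj_hi, Rmin; destruct Rle_dec; lra).
  assert (Hx : Xa + tm*(Xb-Xa) = xm) by (subst tm D; field; exact HD).
  split; [|split; [exact Hx|subst xm; lra]].
  apply strictly_between_param with Xa Xb. rewrite Hx. subst xm; lra.
Qed.

Lemma mid_ordinate_nonzero : ym <> 0.
Proof.
  intro Hy. destruct midpoint_props as (Ht & Hx & Hxm).
  destruct (HNC tm) as [H|H]; [lra|exact Hy|rewrite Hx; lra|..];
  apply Rmult_integral in H; destruct H; try lra; apply D_nonzero; auto.
Qed.

Lemma side_det_mid : side_det Xa Xb Ya Yb (l*l) = 2 * D * D * ym.
Proof.
  unfold side_det. fold lo hi D. destruct midpoint_props as (_ & Hx & _).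
  assert (lo + hi = 2*(Xa + tm*D)) by (fold D in Hx; rewrite Hx; subst xm; field).
  rewrite H. subst ym. ring.
Qed.

(** Over the first bar, the second bar stays on the side of its midpoint and
    meets the line only at its endpoints: otherwise, between the midpoint and a
    point on the other side there would be a crossing. *)
Lemma one_side s : (s = 1 \/ s = -1) -> s * ym > 0 -> forall t, 0 <= t <= 1 ->
  0 <= Xa + t*(Xb-Xa) <= l*l ->
  s*(Ya + t*(Yb-Ya)) >= 0 /\ (Ya + t*(Yb-Ya) = 0 -> t = 0 \/ t = 1).
Proof.
  intros Hs Hsy t Ht HX. pose proof D_nonzero as HD. destruct midpoint_props as (Htm & Hxm & Hxm2).
  split.
  2:{ intro Hy0. destruct (HNC t Ht Hy0 HX) as [H|H]; apply Rmult_integral in H;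
      destruct H; [left|contradiction|right|contradiction]; lra. }
  destruct (Rge_dec (s*(Ya + t*(Yb-Ya))) 0) as [Hge|Hlt]; [exact Hge|exfalso].
  set (yt := Ya + t*(Yb-Ya)) in *.
  assert (Hyd : yt - ym = (t - tm)*(Yb-Ya)) by (subst yt ym; ring).
  assert (Hden : s*(ym - yt) > 0) by lra.
  assert (Hne : ym - yt <> 0) by (intro H; rewrite H in Hden; lra).
  set (lam := ym / (ym - yt)).
  assert (Hlam : 0 < lam < 1).
  { subst lam. replace (ym / (ym - yt)) with ((s*ym)/(s*(ym-yt))) by (field; destruct Hs; subst; lra).
    split; [apply Rdiv_lt_0_compat; lra|].
    apply Rmult_lt_reg_r with (s*(ym-yt)); [lra|]. unfold Rdiv. rewrite Rmult_assoc, Rinv_l by lra. lra. }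
  set (t' := tm + lam*(t - tm)).
  assert (Hy' : Ya + t'*(Yb-Ya) = 0).
  { subst t' lam. replace (Ya + (tm + ym / (ym - yt) * (t - tm)) * (Yb - Ya))
      with (ym + ym / (ym - yt) * ((t - tm) * (Yb - Ya))) by (subst ym; ring).
    rewrite <- Hyd. field. exact Hne. }
  assert (HX' : 0 <= Xa + t'*(Xb-Xa) <= l*l).
  { replace (Xa + t'*(Xb-Xa)) with ((1-lam)*(Xa + tm*(Xb-Xa)) + lam*(Xa + t*(Xb-Xa))) by (subst t'; ring).
    rewrite Hxm. split; nra. }
  destruct (HNC t' ltac:(subst t'; split; nra) Hy' HX') as [H|H]; apply Rmult_integral in H;
    destruct H; try contradiction; subst t'; nra.
Qed.

Lemma side_len_near s : (s = 1 \/ s = -1) -> s * ym > 0 ->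
  side_len Xa Xb Ya Yb l s = proj_len Xa Xb (l*l) / l.
Proof.
  intros Hs Hsy. pose proof D_nonzero as HD. destruct lo_lt_hi as [Hlh ->].
  unfold side_len. apply len_scaled; [exact Hl|lra|]. intro x. split.
  - intro Hx. apply (side_set_proj s), Hx.
  - intro Hv. apply proj_range in Hv; [|nra]. destruct Hv as [Hv1 Hv2].
    set (t := (x*l - Xa)/(Xb - Xa)).
    assert (Hxt : Xa + t*(Xb-Xa) = x*l) by (subst t; field; exact HD).
    assert (Ht : 0 <= t <= 1) by (apply (between_param Xa Xb); [unfold D in HD; lra|lra]).
    split; [split; nra|].
    exists t. split; [exact Ht|split; [exact Hxt|]].
    apply (one_side s Hs Hsy t Ht). lra.
Qed.

(** On the other side, only an endpoint of the second bar can be counted. *)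
Lemma side_len_far s : (s = 1 \/ s = -1) -> s * ym > 0 -> side_len Xa Xb Ya Yb l (-s) = 0.
Proof.
  intros Hs Hsy.
  assert (Hend : forall x, (0 <= x <= l /\ exists t, 0 <= t <= 1 /\
            Xa + t*(Xb-Xa) = x*l /\ -s*(Ya + t*(Yb-Ya)) >= 0) ->
          (Ya = 0 /\ x*l = Xa) \/ (Yb = 0 /\ x*l = Xb)).
  { intros x [Hx (t & Ht & Hxt & Hs')].
    destruct (one_side s Hs Hsy t Ht ltac:(rewrite Hxt; split; nra)) as [H1 H2].
    assert (Hy0 : Ya + t*(Yb-Ya) = 0) by (destruct Hs; subst; lra).
    destruct (H2 Hy0) as [-> | ->]; [left|right]; split; lra. }
  assert (Hab : ~ (Ya = 0 /\ Yb = 0)).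
  { intros [HYa HYb]. unfold ym in Hsy. rewrite HYa, HYb in Hsy. lra. }
  unfold side_len. destruct (Req_dec Ya 0) as [HYa|HYa].
  - apply len_subsingleton with (c := Xa / l). intros x Hx.
    destruct (Hend x Hx) as [[_ H]|[HYb _]]; [|tauto]. rewrite <- H. field. lra.
  - apply len_subsingleton with (c := Xb / l). intros x Hx.
    destruct (Hend x Hx) as [[H _]|[_ H]]; [tauto|]. rewrite <- H. field. lra.
Qed.
End NontrivialProjection.

Lemma side_len_diff : no_crossing Xa Xb Ya Yb (l*l) ->
  side_len Xa Xb Ya Yb l 1 - side_len Xa Xb Ya Yb l (-1) = ord_formula Xa Xb Ya Yb (l*l).
Proof.
  intro HNC. unfold ord_formula. rewrite sqrt_square by lra.
  destruct (Rle_dec (proj_len Xa Xb (l*l)) 0) as [H0|H0].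
  - rewrite !side_len_flat by lra.
    replace (proj_len Xa Xb (l*l)) with 0 by (pose proof (proj_len_bounds Xa Xb (l*l)); nra).
    unfold Rdiv. ring.
  - assert (HP : 0 < proj_len Xa Xb (l*l)) by lra.
    pose proof (mid_ordinate_nonzero HNC HP) as Hy.
    pose proof (D_nonzero HP) as HD.
    rewrite (side_det_mid HP).
    set (ym := Ya + ((proj_lo Xa Xb + proj_hi Xa Xb (l * l)) / 2 - Xa) / (Xb - Xa) * (Yb - Ya)) in *.
    assert (HDD : (Xb - Xa) * (Xb - Xa) > 0) by (apply Rsqr_pos_lt in HD; exact HD).
    destruct (Rlt_dec 0 ym) as [Hpos|Hneg].
    + assert (Hs : 1 = 1 \/ 1 = -1) by (left; reflexivity).
      assert (Hsy : 1 * ym > 0) by lra.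
      assert (Hdet : 2 * (Xb - Xa) * (Xb - Xa) * ym > 0) by nra.
      pose proof (side_len_far HNC HP 1 Hs Hsy) as Hfar. replace (- (1)) with (-1) in Hfar by ring.
      rewrite (side_len_near HNC HP 1 Hs Hsy), Hfar, signum_pos by exact Hdet.
      field. lra.
    + assert (Hs : -1 = 1 \/ -1 = -1) by (right; reflexivity).
      assert (Hsy : -1 * ym > 0) by (destruct (Req_dec ym 0); [contradiction|lra]).
      assert (Hdet : 2 * (Xb - Xa) * (Xb - Xa) * ym < 0) by nra.
      pose proof (side_len_far HNC HP (-1) Hs Hsy) as Hfar. replace (- -1) with 1 in Hfar by ring.
      rewrite (side_len_near HNC HP (-1) Hs Hsy), Hfar, signum_neg by exact Hdet.
      field. lra.
Qed.
End FrameData.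

Definition ord_of (p q a b : pt) : R :=
  ord_formula (frameX p q a) (frameX p q b) (frameY p q a) (frameY p q b) (sqlen p q).

Lemma div_pos_eq x l v : l > 0 -> (v / l = x <-> v = x * l).
Proof. intro. split; intro H0; subst; field; lra. Qed.

Lemma div_pos_sign s y l : l > 0 -> (s * (y / l) >= 0 <-> s * y >= 0).
Proof.
  intro Hl. replace (s * (y / l)) with ((s * y) * / l) by (field; lra).
  pose proof (Rinv_0_lt_compat l Hl). split; intro H1; [|nra].
  apply Rle_ge. apply (Rmult_le_reg_r (/ l)); nra.
Qed.

Lemma d_pm_side_len s p q a b : sqlen p q > 0 -> d_pm s (p,q) (a,b) =
  side_len (frameX p q a) (frameX p q b) (frameY p q a) (frameY p q b) (Defs.dist p q) s.
Proof.
  intro HQ. assert (Hl : Defs.dist p q > 0) by (rewrite dist_sqlen; apply sqrt_lt_R0; exact HQ).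
  unfold d_pm, side_len. apply len_ext. intro x. split.
  - intros [Hx (z & (t & Ht & Hzx & Hzy) & HX & HY)]. split; [exact Hx|].
    destruct (frame_affine p q a b z t Hzx Hzy) as [EX EY].
    exists t. rewrite ord_X_frame, EX, div_pos_eq in HX by exact Hl.
    rewrite ord_Y_frame, EY, div_pos_sign in HY by exact Hl. auto.
  - intros [Hx (t & Ht & HX & HY)]. split; [exact Hx|].
    set (z := (fst a + t*(fst b - fst a), snd a + t*(snd b - snd a))).
    destruct (frame_affine p q a b z t eq_refl eq_refl) as [EX EY].
    exists z. split; [exists t; auto|].
    rewrite ord_X_frame, ord_Y_frame, EX, EY, div_pos_eq, div_pos_sign by exact Hl. auto.
Qed.

Lemma d_pm_degenerate s p q e : sqlen p q = 0 -> d_pm s (p,q) e = 0.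
Proof.
  intro HQ. destruct e as [a b]. unfold d_pm. apply len_subsingleton with (c := 0).
  rewrite dist_sqlen, HQ, sqrt_0. intros x [Hx _]. lra.
Qed.

Lemma Ord_closed_form p q a b : touch_at_ends p q a b -> Ord (p,q) (a,b) = ord_of p q a b.
Proof.
  intro HT. unfold Ord, ord_of.
  destruct (Req_dec (sqlen p q) 0) as [HQ|HQ].
  - unfold ord_formula. rewrite !d_pm_degenerate, HQ, proj_len_zero by exact HQ. unfold Rdiv. ring.
  - assert (HQ' : sqlen p q > 0) by (pose proof (sqlen_nonneg p q); lra).
    assert (HNC : no_crossing (frameX p q a) (frameX p q b) (frameY p q a) (frameY p q b)
                   (Defs.dist p q * Defs.dist p q)).
    { rewrite dist_sqlen, sqrt_sqrt by lra.
      apply frame_touch_no_crossing, touch_at_ends_frame; auto. }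
    rewrite !d_pm_side_len by exact HQ'. rewrite side_len_diff; [|rewrite dist_sqlen; apply sqrt_lt_R0; lra|exact HNC].
    rewrite dist_sqlen, sqrt_sqrt by lra. reflexivity.
Qed.

Lemma ord_Y_on_seg p q z : on_seg p q z -> ord_Y p q z = 0.
Proof.
  intros (t & _ & Hx & Hy). rewrite ord_Y_frame.
  destruct (frame_affine p q p q z t Hx Hy) as [_ EY].
  rewrite EY, (proj2 (frame_p p q)), (proj2 (frame_q p q)). unfold Rdiv. ring.
Qed.

Lemma Ord_self p q : Ord (p,q) (p,q) = 0.
Proof.
  unfold Ord. replace (d_pm (-1) (p, q) (p, q)) with (d_pm 1 (p, q) (p, q)); [ring|].
  unfold d_pm. apply len_ext. intro x.
  split; intros [Hx (z & Hz & HX & HY)]; split; auto; exists z; repeat split; auto;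
    rewrite (ord_Y_on_seg p q z Hz); lra.
Qed.

Lemma ord_formula_bound Xa Xb Ya Yb Q : 0 <= Q -> Rabs (ord_formula Xa Xb Ya Yb Q) <= sqrt Q.
Proof.
  intro HQ. unfold ord_formula. destruct (proj_len_bounds Xa Xb Q HQ) as [HP0 HPQ].
  pose proof (signum_bound (side_det Xa Xb Ya Yb Q)) as Hs.
  destruct (Req_dec Q 0) as [HQ0|HQ0].
  - subst Q. rewrite proj_len_zero, sqrt_0. unfold Rdiv. rewrite Rmult_0_r, Rmult_0_l, Rabs_R0. lra.
  - assert (Hq : sqrt Q > 0) by (apply sqrt_lt_R0; lra).
    unfold Rdiv. rewrite !Rabs_mult, (Rabs_right (proj_len _ _ _)), (Rabs_right (/ sqrt Q))
      by (lra || (left; apply Rinv_0_lt_compat; lra)).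
    apply Rle_trans with (proj_len Xa Xb Q * / sqrt Q).
    + apply Rmult_le_compat_r; [left; apply Rinv_0_lt_compat; lra|].
      pose proof (Rabs_pos (signum (side_det Xa Xb Ya Yb Q))). nra.
    + apply Rmult_le_reg_r with (sqrt Q); [lra|]. rewrite Rmult_assoc, Rinv_l by lra.
      rewrite sqrt_def by lra. lra.
Qed.

Lemma side_det_nonzero Xa Xb Ya Yb l : l > 0 -> no_crossing Xa Xb Ya Yb (l*l) ->
  0 < proj_len Xa Xb (l*l) -> side_det Xa Xb Ya Yb (l*l) <> 0.
Proof.
  intros Hl HNC HP. rewrite (side_det_mid Xa Xb Ya Yb l HP).
  pose proof (mid_ordinate_nonzero Xa Xb Ya Yb l HNC HP). pose proof (D_nonzero Xa Xb l HP).
  repeat (apply Rmult_integral_contrapositive; split); auto; lra.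
Qed.

(** * Continuity of the order function
    Configurations are compared coordinatewise on the vertices 0 .. n-1, as in
    the continuity statement of the theorem. *)
Definition near (n : nat) (d : R) (C C' : nat -> pt) : Prop := forall v, (v < n)%nat ->
  Rabs (fst (C' v) - fst (C v)) < d /\ Rabs (snd (C' v) - snd (C v)) < d.

Definition continuous_at_config (n : nat) (F : (nat -> pt) -> R) (C : nat -> pt) : Prop :=
  forall e, e > 0 -> exists d, d > 0 /\ forall C', near n d C C' -> Rabs (F C' - F C) < e.

Lemma near_mono n d d' C C' : d' <= d -> near n d' C C' -> near n d C C'.
Proof. intros H Hc v Hv. destruct (Hc v Hv); split; lra. Qed.

Section ContinuityRules.
Variable n : nat.
Variable C0 : nat -> pt.
Notation cont F := (continuous_at_config n F C0).

Lemma cont_const c : cont (fun _ => c).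
Proof. intros e He. exists 1. split; [lra|]. intros. rewrite Rminus_diag, Rabs_R0. lra. Qed.

Lemma cont_fst v : (v < n)%nat -> cont (fun C => fst (C v)).
Proof. intros Hv e He. exists e. split; [lra|]. intros C' Hc. apply (Hc v Hv). Qed.

Lemma cont_snd v : (v < n)%nat -> cont (fun C => snd (C v)).
Proof. intros Hv e He. exists e. split; [lra|]. intros C' Hc. apply (Hc v Hv). Qed.

Lemma cont_lipschitz2 (h : R -> R -> R) F G :
  (forall a b c d, Rabs (h a b - h c d) <= Rabs (a - c) + Rabs (b - d)) ->
  cont F -> cont G -> cont (fun C => h (F C) (G C)).
Proof.
  intros Hh HF HG e He.
  destruct (HF (e/2) ltac:(lra)) as (d1 & Hd1 & H1).
  destruct (HG (e/2) ltac:(lra)) as (d2 & Hd2 & H2).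
  exists (Rmin d1 d2). split; [apply Rmin_pos; auto|]. intros C' Hc.
  specialize (H1 C' (near_mono _ _ _ _ _ (Rmin_l _ _) Hc)).
  specialize (H2 C' (near_mono _ _ _ _ _ (Rmin_r _ _) Hc)).
  specialize (Hh (F C') (G C') (F C0) (G C0)). lra.
Qed.

Lemma cont_plus F G : cont F -> cont G -> cont (fun C => F C + G C).
Proof.
  apply cont_lipschitz2. intros. replace (a + b - (c + d)) with ((a - c) + (b - d)) by ring.
  apply Rabs_triang.
Qed.

Lemma cont_minus F G : cont F -> cont G -> cont (fun C => F C - G C).
Proof.
  apply cont_lipschitz2. intros. replace (a - b - (c - d)) with ((a - c) + - (b - d)) by ring.
  rewrite <- (Rabs_Ropp (b - d)). apply Rabs_triang.
Qed.

Lemma cont_max F G : cont F -> cont G -> cont (fun C => Rmax (F C) (G C)).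
Proof.
  apply cont_lipschitz2. intros. unfold Rmax.
  repeat destruct Rle_dec; unfold Rabs; repeat destruct Rcase_abs; lra.
Qed.

Lemma cont_min F G : cont F -> cont G -> cont (fun C => Rmin (F C) (G C)).
Proof.
  apply cont_lipschitz2. intros. unfold Rmin.
  repeat destruct Rle_dec; unfold Rabs; repeat destruct Rcase_abs; lra.
Qed.

Lemma cont_mult F G : cont F -> cont G -> cont (fun C => F C * G C).
Proof.
  intros HF HG e He.
  set (M := Rabs (F C0) + Rabs (G C0) + 1).
  assert (HM : M > 0) by (pose proof (Rabs_pos (F C0)); pose proof (Rabs_pos (G C0)); unfold M; lra).
  set (e1 := Rmin 1 (e / (2*M))).
  assert (He1 : 0 < e1 <= 1) by (split; [apply Rmin_pos; [lra|apply Rdiv_lt_0_compat; lra]|apply Rmin_l]).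
  assert (He1M : e1 * M <= e/2).
  { apply Rle_trans with (e / (2*M) * M); [apply Rmult_le_compat_r; [lra|apply Rmin_r]|].
    right; field; lra. }
  destruct (HF e1 ltac:(lra)) as (d1 & Hd1 & H1).
  destruct (HG e1 ltac:(lra)) as (d2 & Hd2 & H2).
  exists (Rmin d1 d2). split; [apply Rmin_pos; auto|]. intros C' Hc.
  specialize (H1 C' (near_mono _ _ _ _ _ (Rmin_l _ _) Hc)).
  specialize (H2 C' (near_mono _ _ _ _ _ (Rmin_r _ _) Hc)).
  replace (F C' * G C' - F C0 * G C0) with (F C' * (G C' - G C0) + G C0 * (F C' - F C0)) by ring.
  eapply Rle_lt_trans; [apply Rabs_triang|]. rewrite !Rabs_mult.
  assert (HFC' : Rabs (F C') <= Rabs (F C0) + 1).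
  { replace (F C') with (F C0 + (F C' - F C0)) by ring.
    eapply Rle_trans; [apply Rabs_triang|]. lra. }
  pose proof (Rabs_pos (G C' - G C0)). pose proof (Rabs_pos (G C0)).
  assert (Rabs (F C') * Rabs (G C' - G C0) <= (Rabs (F C0) + 1) * e1)
    by (apply Rmult_le_compat; try apply Rabs_pos; lra).
  assert (Rabs (G C0) * Rabs (F C' - F C0) <= Rabs (G C0) * e1)
    by (apply Rmult_le_compat_l; [apply Rabs_pos|lra]).
  assert ((Rabs (F C0) + 1) * e1 + Rabs (G C0) * e1 = e1 * M) by (unfold M; ring).
  lra.
Qed.

Lemma cont_comp (g : R -> R) F : continuity_pt g (F C0) -> cont F -> cont (fun C => g (F C)).
Proof.
  intros Hg HF e He.
  destruct (Hg e He) as (a & Ha & H). destruct (HF a Ha) as (d & Hd & H2).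
  exists d. split; auto. intros C' Hc.
  destruct (Req_dec (F C') (F C0)) as [E|E].
  - rewrite E, Rminus_diag, Rabs_R0. lra.
  - apply (H (F C')). split; [split; [exact I|auto]|]. apply H2; auto.
Qed.
End ContinuityRules.

Ltac cont_tac := repeat (first [apply cont_minus | apply cont_plus | apply cont_mult
   | apply cont_max | apply cont_min | (apply cont_fst; lia) | (apply cont_snd; lia)
   | apply cont_const]).

Lemma signum_stable x y : x <> 0 -> Rabs (y - x) < Rabs x -> signum y = signum x.
Proof.
  intros Hx H. unfold Rabs in H. destruct (Rcase_abs (y - x)), (Rcase_abs x); unfold signum;
  repeat destruct Rlt_dec; try lra; destruct (Req_dec x 0); contradiction || lra.
Qed.

Lemma sqrt_lt_of_sq x e : e > 0 -> 0 <= x -> x < e * e -> sqrt x < e.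
Proof.
  intros He Hx H. destruct (Rlt_dec (sqrt x) e) as [|Hn]; auto. exfalso.
  pose proof (sqrt_sqrt x Hx). nra.
Qed.

Section OrdContinuity.
Variables (n u1 v1 u2 v2 : nat).
Hypotheses (Hu1 : (u1 < n)%nat) (Hv1 : (v1 < n)%nat) (Hu2 : (u2 < n)%nat) (Hv2 : (v2 < n)%nat).

Let Qc (C : nat -> pt) := sqlen (C u1) (C v1).
Let Pc (C : nat -> pt) :=
  proj_len (frameX (C u1) (C v1) (C u2)) (frameX (C u1) (C v1) (C v2)) (Qc C).
Let Gc (C : nat -> pt) := side_det (frameX (C u1) (C v1) (C u2)) (frameX (C u1) (C v1) (C v2))
   (frameY (C u1) (C v1) (C u2)) (frameY (C u1) (C v1) (C v2)) (Qc C).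
Let Oc (C : nat -> pt) := ord_of (C u1) (C v1) (C u2) (C v2).

Lemma Oc_split C : Oc C = signum (Gc C) * (Pc C * / sqrt (Qc C)).
Proof. unfold Oc, ord_of, ord_formula, Gc, Pc, Qc, Rdiv. ring. Qed.

Lemma Qc_cont C0 : continuous_at_config n Qc C0.
Proof. unfold Qc, sqlen. cont_tac. Qed.

Lemma Gc_cont C0 : continuous_at_config n Gc C0.
Proof. unfold Gc, side_det, proj_hi, proj_lo, frameX, frameY, Qc, sqlen. cont_tac. Qed.

Lemma magnitude_cont C0 : Qc C0 > 0 -> continuous_at_config n (fun C => Pc C * / sqrt (Qc C)) C0.
Proof.
  intro HQ. apply cont_mult.
  - unfold Pc, proj_len, proj_hi, proj_lo, frameX, Qc, sqlen. cont_tac.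
  - apply (cont_comp n C0 (fun x => / sqrt x) Qc); [|apply Qc_cont].
    change (continuity_pt (/ sqrt)%F (Qc C0)).
    apply continuity_pt_inv; [apply sqrt_continuity_pt; lra|].
    assert (sqrt (Qc C0) > 0) by (apply sqrt_lt_R0; lra). lra.
Qed.

(** At a degenerate first bar, [ord_of] tends to 0 since |ord_of| <= sqrt Qc. *)
Lemma Oc_cont_degenerate C0 : Qc C0 = 0 -> continuous_at_config n Oc C0.
Proof.
  intros HQ e He. destruct (Qc_cont C0 (e*e) ltac:(nra)) as (d & Hd & Hc).
  exists d. split; auto. intros C' Hcl. specialize (Hc C' Hcl).
  assert (Hb : forall C, Rabs (Oc C) <= sqrt (Qc C)) by (intro C; apply ord_formula_bound, sqlen_nonneg).
  assert (HO0 : Oc C0 = 0)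
    by (pose proof (Hb C0) as H; rewrite HQ, sqrt_0 in H; unfold Rabs in H; destruct Rcase_abs; lra).
  rewrite HO0, Rminus_0_r. eapply Rle_lt_trans; [apply Hb|].
  apply sqrt_lt_of_sq; auto; [apply sqlen_nonneg|].
  rewrite HQ, Rminus_0_r in Hc. apply Rabs_def2 in Hc. lra.
Qed.

(** With a trivial projection, [ord_of] vanishes and is dominated by its magnitude. *)
Lemma Oc_cont_flat C0 : Qc C0 > 0 -> Pc C0 = 0 -> continuous_at_config n Oc C0.
Proof.
  intros HQ HP e He. destruct (magnitude_cont C0 HQ e He) as (d & Hd & Hc).
  exists d. split; auto. intros C' Hcl. specialize (Hc C' Hcl).
  rewrite !Oc_split, HP in *. rewrite Rmult_0_l, Rmult_0_r, Rminus_0_r in *.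
  rewrite Rabs_mult. pose proof (signum_bound (Gc C')).
  pose proof (Rabs_pos (Pc C' * / sqrt (Qc C'))). nra.
Qed.

(** With a nontrivial projection and no crossing, the side is locally constant. *)
Lemma Oc_cont_generic C0 : Qc C0 > 0 -> Pc C0 > 0 -> Gc C0 <> 0 -> continuous_at_config n Oc C0.
Proof.
  intros HQ HP HG e He.
  destruct (Gc_cont C0 (Rabs (Gc C0)) (Rabs_pos_lt _ HG)) as (d1 & Hd1 & Hc1).
  destruct (magnitude_cont C0 HQ e He) as (d2 & Hd2 & Hc2).
  exists (Rmin d1 d2). split; [apply Rmin_pos; auto|]. intros C' Hcl.
  specialize (Hc1 C' (near_mono _ _ _ _ _ (Rmin_l _ _) Hcl)).
  specialize (Hc2 C' (near_mono _ _ _ _ _ (Rmin_r _ _) Hcl)).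
  rewrite !Oc_split, (signum_stable _ _ HG Hc1), <- Rmult_minus_distr_l, Rabs_mult.
  pose proof (signum_bound (Gc C0)).
  pose proof (Rabs_pos (Pc C' * / sqrt (Qc C') - Pc C0 * / sqrt (Qc C0))). nra.
Qed.

Lemma ord_of_cont C0 : touch_at_ends (C0 u1) (C0 v1) (C0 u2) (C0 v2) ->
  continuous_at_config n (fun C => ord_of (C u1) (C v1) (C u2) (C v2)) C0.
Proof.
  intro HT. fold Oc. pose proof (sqlen_nonneg (C0 u1) (C0 v1)).
  destruct (Req_dec (Qc C0) 0) as [HQ|HQ]; [apply Oc_cont_degenerate; exact HQ|].
  assert (HQ' : Qc C0 > 0) by (unfold Qc in *; lra).
  pose proof (proj_len_bounds (frameX (C0 u1) (C0 v1) (C0 u2)) (frameX (C0 u1) (C0 v1) (C0 v2))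
                (Qc C0) ltac:(lra)) as [HP0 _].
  destruct (Rle_dec (Pc C0) 0) as [HP|HP]; [apply Oc_cont_flat; [exact HQ'|unfold Pc in *; lra]|].
  apply Oc_cont_generic; [exact HQ'|lra|].
  assert (HNC := frame_touch_no_crossing _ _ _ _ _ (proj1 (touch_at_ends_frame _ _ _ _ HQ') HT)).
  unfold Gc, Pc in *. fold (Qc C0) in HNC.
  rewrite <- (sqrt_sqrt (Qc C0)) in HNC, HP |- * by lra.
  apply side_det_nonzero; [apply sqrt_lt_R0; exact HQ'|exact HNC|lra].
Qed.
End OrdContinuity.

(** * Quantifier-free formulas *)

Fixpoint psubst (s : nat -> rpoly) (p : rpoly) : rpoly :=
  match p with
  | PVar i => s i | PConst c => PConst c
  | PAdd p q => PAdd (psubst s p) (psubst s q)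
  | PMul p q => PMul (psubst s p) (psubst s q)
  | POpp p => POpp (psubst s p)
  end.

Fixpoint qsubst (s : nat -> rpoly) (f : qf) : qf :=
  match f with
  | FEq0 p => FEq0 (psubst s p) | FPos p => FPos (psubst s p)
  | FAnd f g => FAnd (qsubst s f) (qsubst s g)
  | FOr f g => FOr (qsubst s f) (qsubst s g)
  | FNot f => FNot (qsubst s f)
  end.

Lemma peval_subst x s p : peval x (psubst s p) = peval (fun i => peval x (s i)) p.
Proof. induction p; simpl; congruence. Qed.

Lemma qeval_subst x s f : qeval x (qsubst s f) <-> qeval (fun i => peval x (s i)) f.
Proof. induction f; simpl; rewrite ?peval_subst; tauto. Qed.

Lemma pvars_subst k s p : (forall i, pvars_lt k (s i)) -> pvars_lt k (psubst s p).
Proof. intro H; induction p; simpl; auto. Qed.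

Lemma qvars_subst k s f : (forall i, pvars_lt k (s i)) -> qvars_lt k (qsubst s f).
Proof. intro H; induction f; simpl; auto using pvars_subst. Qed.

Definition rsub (a b : rpoly) : rpoly := PAdd a (POpp b).
Definition fTrue : qf := FEq0 (PConst 0).
Definition fFalse : qf := FPos (PConst 0).

Lemma qeval_fTrue x : qeval x fTrue.
Proof. simpl; auto. Qed.

Lemma qeval_fFalse x : ~ qeval x fFalse.
Proof. simpl; lra. Qed.

Fixpoint or_list (l : list qf) : qf :=
  match l with nil => fFalse | f :: l => FOr f (or_list l) end.

Lemma qeval_or_list x l : qeval x (or_list l) <-> exists f, In f l /\ qeval x f.
Proof.
  induction l as [|f l IH]; simpl.
  - split; [lra|]. intros (f & [] & _).
  - rewrite IH. split.
    + intros [H|(g & Hg & H)]; eauto.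
    + intros (g & [<-|Hg] & H); eauto.
Qed.

Fixpoint and_upto (N : nat) (f : nat -> qf) : qf :=
  match N with O => fTrue | S N => FAnd (and_upto N f) (f N) end.

Lemma qeval_and_upto x N f : qeval x (and_upto N f) <-> forall i, (i < N)%nat -> qeval x (f i).
Proof.
  induction N as [|N IH]; simpl.
  - split; [intros; lia|auto].
  - rewrite IH. split.
    + intros [H1 H2] i Hi. destruct (Nat.eq_dec i N); [subst; auto|apply H1; lia].
    + intro H. split; auto.
Qed.

Lemma qvars_and_upto k N f : (forall i, (i < N)%nat -> qvars_lt k (f i)) -> qvars_lt k (and_upto N f).
Proof. induction N; simpl; intros H; auto. split; [apply IHN; intros; apply H; lia|apply H; lia]. Qed.

Definition pwpoly := list (qf * rpoly).

Definition represents (f : (nat -> R) -> R) (L : pwpoly) : Prop :=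
  (forall x, exists c r, In (c, r) L /\ qeval x c) /\
  (forall x c r, In (c, r) L -> qeval x c -> peval x r = f x).

Definition pw_poly (p : rpoly) : pwpoly := (fTrue, p) :: nil.

Lemma pw_poly_ok p : represents (fun x => peval x p) (pw_poly p).
Proof.
  split; [intro x; exists fTrue, p; split; [left; auto|apply qeval_fTrue]|].
  intros x c r [E|[]] _. inversion E; auto.
Qed.

Definition pw_map2 (op : rpoly -> rpoly -> rpoly) (L1 L2 : pwpoly) : pwpoly :=
  flat_map (fun a => map (fun b => (FAnd (fst a) (fst b), op (snd a) (snd b))) L2) L1.

Lemma in_pw_map2 op L1 L2 c r : In (c, r) (pw_map2 op L1 L2) <->
  exists c1 r1 c2 r2, In (c1,r1) L1 /\ In (c2,r2) L2 /\ c = FAnd c1 c2 /\ r = op r1 r2.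
Proof.
  unfold pw_map2. rewrite in_flat_map. split.
  - intros ([c1 r1] & H1 & H2). rewrite in_map_iff in H2. destruct H2 as ([c2 r2] & E & H2).
    simpl in E. inversion E. eauto 10.
  - intros (c1 & r1 & c2 & r2 & H1 & H2 & -> & ->). exists (c1, r1). split; auto.
    apply in_map_iff. exists (c2, r2). auto.
Qed.

Lemma pw_map2_ok op g f1 f2 L1 L2 : (forall x a b, peval x (op a b) = g (peval x a) (peval x b)) ->
  represents f1 L1 -> represents f2 L2 -> represents (fun x => g (f1 x) (f2 x)) (pw_map2 op L1 L2).
Proof.
  intros Hop [A1 B1] [A2 B2]. split.
  - intro x. destruct (A1 x) as (c1 & r1 & H1 & Q1). destruct (A2 x) as (c2 & r2 & H2 & Q2).
    exists (FAnd c1 c2), (op r1 r2). split; [apply in_pw_map2; eauto 10|simpl; auto].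
  - intros x c r Hin Hq. apply in_pw_map2 in Hin.
    destruct Hin as (c1 & r1 & c2 & r2 & H1 & H2 & -> & ->).
    destruct Hq as [Q1 Q2]. rewrite Hop. erewrite B1, B2; eauto.
Qed.

Definition pw_select (F : rpoly -> rpoly -> qf) (L1 L2 : pwpoly) : pwpoly :=
  flat_map (fun a => flat_map (fun b =>
     (FAnd (FAnd (fst a) (fst b)) (F (snd a) (snd b)), snd a) ::
     (FAnd (FAnd (fst a) (fst b)) (FNot (F (snd a) (snd b))), snd b) :: nil) L2) L1.

Lemma in_pw_select F L1 L2 c r : In (c, r) (pw_select F L1 L2) <->
  exists c1 r1 c2 r2, In (c1,r1) L1 /\ In (c2,r2) L2 /\
   ((c = FAnd (FAnd c1 c2) (F r1 r2) /\ r = r1) \/ (c = FAnd (FAnd c1 c2) (FNot (F r1 r2)) /\ r = r2)).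
Proof.
  unfold pw_select. rewrite in_flat_map. split.
  - intros ([c1 r1] & H1 & H2). rewrite in_flat_map in H2. destruct H2 as ([c2 r2] & H2 & H3).
    simpl in H3. destruct H3 as [E|[E|[]]]; injection E as Ec Er; subst c r; exists c1, r1, c2, r2; auto.
  - intros (c1 & r1 & c2 & r2 & H1 & H2 & H3). exists (c1, r1). split; auto.
    apply in_flat_map. exists (c2, r2). split; auto. simpl.
    destruct H3 as [[-> ->]|[-> ->]]; auto.
Qed.

Lemma pw_select_ok (h : R -> R -> R) (F : rpoly -> rpoly -> qf) f1 f2 L1 L2 :
  (forall x a b, qeval x (F a b) -> h (peval x a) (peval x b) = peval x a) ->
  (forall x a b, ~ qeval x (F a b) -> h (peval x a) (peval x b) = peval x b) ->
  represents f1 L1 -> represents f2 L2 -> represents (fun x => h (f1 x) (f2 x)) (pw_select F L1 L2).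
Proof.
  intros HF1 HF2 [A1 B1] [A2 B2]. split.
  - intro x. destruct (A1 x) as (c1 & r1 & H1 & Q1). destruct (A2 x) as (c2 & r2 & H2 & Q2).
    destruct (classic (qeval x (F r1 r2))) as [Hq|Hq].
    + exists (FAnd (FAnd c1 c2) (F r1 r2)), r1. split; [apply in_pw_select; eauto 10|simpl; auto].
    + exists (FAnd (FAnd c1 c2) (FNot (F r1 r2))), r2. split; [apply in_pw_select; eauto 10|simpl; auto].
  - intros x c r Hin Hq. apply in_pw_select in Hin.
    destruct Hin as (c1 & r1 & c2 & r2 & H1 & H2 & [[Ec Er]|[Ec Er]]); subst c r;
      destruct Hq as [[Q1 Q2] Q3];
      rewrite <- (B1 x c1 r1), <- (B2 x c2 r2); auto; [rewrite HF1|rewrite HF2]; auto.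
Qed.

Definition fge (a b : rpoly) : qf := FNot (FPos (rsub b a)).

Definition pw_max : pwpoly -> pwpoly -> pwpoly := pw_select fge.

Lemma pw_max_ok f1 f2 L1 L2 : represents f1 L1 -> represents f2 L2 ->
  represents (fun x => Rmax (f1 x) (f2 x)) (pw_max L1 L2).
Proof. apply pw_select_ok; intros x a b H; simpl in H; unfold Rmax; destruct Rle_dec; lra. Qed.

Definition pw_min : pwpoly -> pwpoly -> pwpoly := pw_select (fun a b => fge b a).

Lemma pw_min_ok f1 f2 L1 L2 : represents f1 L1 -> represents f2 L2 ->
  represents (fun x => Rmin (f1 x) (f2 x)) (pw_min L1 L2).
Proof. apply pw_select_ok; intros x a b H; simpl in H; unfold Rmin; destruct Rle_dec; lra. Qed.

Definition pw_signum (L : pwpoly) : pwpoly :=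
  flat_map (fun a => (FAnd (fst a) (FPos (snd a)), PConst 1) ::
                     (FAnd (fst a) (FPos (POpp (snd a))), PConst (-1)) ::
                     (FAnd (fst a) (FEq0 (snd a)), PConst 0) :: nil) L.

Lemma pw_signum_ok f L : represents f L -> represents (fun x => signum (f x)) (pw_signum L).
Proof.
  intros [A B]. split.
  - intro x. destruct (A x) as (c & r & H & Q).
    assert (Hin : forall c' r', In (c', r') ((FAnd c (FPos r), PConst 1) ::
         (FAnd c (FPos (POpp r)), PConst (-1)) :: (FAnd c (FEq0 r), PConst 0) :: nil) ->
         In (c', r') (pw_signum L)) by (intros; apply in_flat_map; exists (c, r); auto).
    destruct (Rtotal_order (peval x r) 0) as [Hn|[Hz|Hp]].
    + exists (FAnd c (FPos (POpp r))), (PConst (-1)). split; [apply Hin; simpl; auto|simpl; split; auto; lra].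
    + exists (FAnd c (FEq0 r)), (PConst 0). split; [apply Hin; simpl; auto|simpl; split; auto].
    + exists (FAnd c (FPos r)), (PConst 1). split; [apply Hin; simpl; auto|simpl; split; auto].
  - intros x c r Hin Hq. apply in_flat_map in Hin. destruct Hin as ([c1 r1] & H1 & H2).
    simpl in H2. pose proof (B x c1 r1 H1) as E.
    destruct H2 as [Ee|[Ee|[Ee|[]]]]; inversion Ee; subst; simpl in Hq; destruct Hq as [Q1 Q2];
    rewrite <- (E Q1); simpl; unfold signum; repeat destruct Rlt_dec; lra.
Qed.

Lemma qf_definable_by_atoms k (fs : list qf) : forall (P : (nat -> R) -> Prop),
  (forall f, In f fs -> qvars_lt k f) ->
  (forall x y, (forall f, In f fs -> (qeval x f <-> qeval y f)) -> (P x <-> P y)) ->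
  exists g, qvars_lt k g /\ forall x, P x <-> qeval x g.
Proof.
  induction fs as [|f fs IH]; intros P Hv HP.
  - destruct (classic (exists x, P x)) as [[x0 Hx0]|Hn].
    + exists fTrue. split; [simpl; auto|]. intro x. split; intros _; [apply qeval_fTrue|].
      apply (HP x0 x); auto. intros f [].
    + exists fFalse. split; [simpl; auto|]. intro x. split; intro H; [exfalso; eauto|].
      apply qeval_fFalse in H; contradiction.
  - (* P_with b: P holds at a point with the same values of fs and with f of value b *)
    set (P_with := fun (b : bool) x => exists y, (if b then qeval y f else ~ qeval y f) /\
            (forall h, In h fs -> (qeval x h <-> qeval y h)) /\ P y).
    assert (Hv' : forall h, In h fs -> qvars_lt k h) by (intros; apply Hv; right; auto).
    assert (Hinv : forall b x x', (forall h, In h fs -> (qeval x h <-> qeval x' h)) ->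
              (P_with b x <-> P_with b x')).
    { intros b x x' Hxx'. unfold P_with. split; intros (y & A & B & C); exists y;
        split; auto; split; auto; intros h' Hh'; rewrite <- B; auto; rewrite Hxx'; auto; tauto. }
    destruct (IH (P_with true) Hv') as (g1 & Hg1v & Hg1); [apply Hinv|].
    destruct (IH (P_with false) Hv') as (g0 & Hg0v & Hg0); [apply Hinv|].
    exists (FOr (FAnd f g1) (FAnd (FNot f) g0)). split.
    + simpl. repeat split; auto; apply Hv; left; auto.
    + intro x. simpl qeval. rewrite <- Hg1, <- Hg0. unfold P_with. split.
      * intro Hx. destruct (classic (qeval x f)) as [Hf|Hf]; [left|right]; split; auto;
          exists x; split; auto; split; auto; tauto.
      * intros [[Hf (y & A & B & C)]|[Hf (y & A & B & C)]]; apply (HP y x); auto;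
          intros h [<-|Hh]; [tauto|symmetry; auto|tauto|symmetry; auto].
Qed.

(** A second bar that is not parallel to the first meets its line at the single
    parameter t = -Ya/(Yb-Ya), with abscissa (Xa Yb - Xb Ya)/(Yb - Ya). *)
Lemma frame_touch_transversal Xa Xb Ya Yb Q : Yb - Ya <> 0 ->
  (frame_touch Xa Xb Ya Yb Q <->
   (Ya*Yb <= 0 -> 0 <= (Xa*Yb - Xb*Ya)*(Yb-Ya) <= Q*((Yb-Ya)*(Yb-Ya)) ->
    (Xa*Yb - Xb*Ya = 0 \/ Xa*Yb - Xb*Ya = Q*(Yb-Ya)) /\ (Ya = 0 \/ Yb = 0))).
Proof.
  intro HE. set (E := Yb - Ya) in *. set (W := Xa*Yb - Xb*Ya).
  assert (HE2 : E * E > 0) by (apply Rsqr_pos_lt in HE; exact HE).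
  assert (Hcross : forall t, Ya + t*E = 0 -> (Xa + t*(Xb-Xa)) * E = W)
    by (intros t Ht; replace ((Xa + t*(Xb-Xa)) * E) with (Xa*E + (t*E)*(Xb-Xa)) by ring;
        replace (t*E) with (-Ya) by lra; unfold W, E; ring).
  split.
  - intros HF HY HW. set (t := - Ya / E).
    assert (HtE : Ya + t*E = 0) by (unfold t; field; exact HE).
    assert (Ht : 0 <= t <= 1) by (unfold E in *; split; nra).
    assert (HX : 0 <= Xa + t*(Xb-Xa) <= Q) by (pose proof (Hcross t HtE); split; nra).
    destruct (HF t Ht HtE HX) as [HX0 Hend]. rewrite <- (Hcross t HtE). split.
    + destruct HX0 as [-> | ->]; [left; ring|right; ring].
    + destruct Hend as [[_ H]|[_ H]]; [left|right]; unfold E in *; nra.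
  - intros H t Ht Hy HX. specialize (Hcross t Hy).
    assert (HYa : Ya = -(t*E)) by (unfold E; lra).
    assert (HYb : Yb = (1-t)*E) by (unfold E in *; lra).
    assert (HYY : Ya*Yb <= 0).
    { rewrite HYb, HYa. assert (t*(1-t) >= 0) by nra.
      replace (-(t*E)*((1-t)*E)) with (-(t*(1-t))*(E*E)) by ring. nra. }
    assert (HWE : 0 <= W*E <= Q*(E*E)) by (rewrite <- Hcross; split; nra).
    destruct (H HYY HWE) as [HW Hend]. split.
    + destruct HW as [HW|HW]; [left|right]; rewrite HW in Hcross.
      * apply Rmult_integral in Hcross. destruct Hcross; [assumption|contradiction].
      * assert (Hd : (Xa + t*(Xb-Xa) - Q) * E = 0) by lra.
        apply Rmult_integral in Hd. destruct Hd; [lra|contradiction].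
    + destruct Hend as [H0|H0]; [left|right].
      * assert (HtE : t * E = 0) by lra. apply Rmult_integral in HtE.
        destruct HtE as [Ht0|Ht0]; [|contradiction]. subst t. split; ring.
      * assert (HtE : (1 - t) * E = 0) by lra. apply Rmult_integral in HtE.
        destruct HtE as [Ht1|Ht1]; [|contradiction]. replace t with 1 by lra. split; ring.
Qed.

Lemma interior_param Xa Xb Q : Q > 0 -> ~ (Xa <= 0 /\ Xb <= 0) -> ~ (Q <= Xa /\ Q <= Xb) ->
  exists t, 0 <= t <= 1 /\ 0 < Xa + t*(Xb-Xa) < Q.
Proof.
  intros HQ Hlow Hhigh.
  destruct (classic (0 < Xa < Q)) as [Ha|Ha]; [exists 0; split; lra|].
  destruct (classic (0 < Xb < Q)) as [Hb|Hb]; [exists 1; split; lra|].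
  assert (Hends : (Xa <= 0 /\ Q <= Xb) \/ (Xb <= 0 /\ Q <= Xa)).
  { apply not_and_or in Ha, Hb, Hlow, Hhigh. lra. }
  set (t := (Q/2 - Xa)/(Xb - Xa)).
  assert (Hxt : Xa + t*(Xb-Xa) = Q/2) by (unfold t; field; lra).
  exists t. rewrite Hxt. split; [|lra].
  apply (between_param Xa Xb); [lra|]. rewrite Hxt. unfold Rmin, Rmax. destruct Rle_dec; lra.
Qed.

Lemma frame_touch_parallel Xa Xb Y Q : Q > 0 ->
  (frame_touch Xa Xb Y Y Q <-> Y <> 0 \/ (Xa <= 0 /\ Xb <= 0) \/ (Q <= Xa /\ Q <= Xb)).
Proof.
  intro HQ. split.
  - intro HF. destruct (Req_dec Y 0) as [HY|HY]; [right|left; exact HY].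
    apply NNPP. intro Hn. apply not_or_and in Hn. destruct Hn as [Hlow Hhigh].
    destruct (interior_param Xa Xb Q HQ Hlow Hhigh) as (t & Ht & HX).
    destruct (HF t Ht ltac:(rewrite HY; ring) ltac:(lra)) as [[H|H] _]; lra.
  - intros [HY|[[Ha Hb]|[Ha Hb]]] t Ht Hy HX; [exfalso; apply HY; lra| |].
    + assert (B1 : (1-t)*Xa = 0) by nra. assert (B2 : t*Xb = 0) by nra.
      split; [left; lra|].
      destruct (Req_dec t 1) as [Ht1|Ht1]; [right; subst t; split; ring|left].
      assert (Xa = 0) by (apply Rmult_integral in B1; destruct B1; [lra|auto]).
      split; [|ring]. subst Xa. lra.
    + assert (B1 : (1-t)*(Xa-Q) = 0) by nra. assert (B2 : t*(Xb-Q) = 0) by nra.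
      split; [right; lra|].
      destruct (Req_dec t 1) as [Ht1|Ht1]; [right; subst t; split; ring|left].
      assert (Xa = Q) by (apply Rmult_integral in B1; destruct B1; [lra|lra]).
      split; [|ring]. subst Xa. lra.
Qed.

(** Frame data as a point of R^6: variables 0..5 hold Xa, Xb, Ya, Yb, Q and a value y. *)
Definition frame_env (Xa Xb Ya Yb Q y : R) : nat -> R := fun i =>
  match i with 0 => Xa | 1 => Xb | 2 => Ya | 3 => Yb | 4 => Q | 5 => y | _ => 0 end.

Definition fE : rpoly := rsub (PVar 3) (PVar 2).
Definition fW : rpoly := rsub (PMul (PVar 0) (PVar 3)) (PMul (PVar 1) (PVar 2)).

(** [frame_touch] as a quantifier-free formula, following the two lemmas above. *)
Definition touch_formula : qf :=
  FOr (FAnd (FEq0 fE)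
        (FOr (FNot (FEq0 (PVar 2)))
        (FOr (FAnd (FNot (FPos (PVar 0))) (FNot (FPos (PVar 1))))
             (FAnd (FNot (FPos (rsub (PVar 4) (PVar 0)))) (FNot (FPos (rsub (PVar 4) (PVar 1))))))))
      (FAnd (FNot (FEq0 fE))
        (FOr (FPos (PMul (PVar 2) (PVar 3)))
        (FOr (FPos (POpp (PMul fW fE)))
        (FOr (FPos (rsub (PMul fW fE) (PMul (PVar 4) (PMul fE fE))))
             (FAnd (FOr (FEq0 fW) (FEq0 (rsub fW (PMul (PVar 4) fE))))
                   (FOr (FEq0 (PVar 2)) (FEq0 (PVar 3)))))))).

Lemma touch_formula_sem Xa Xb Ya Yb Q y : Q > 0 ->
  (qeval (frame_env Xa Xb Ya Yb Q y) touch_formula <-> frame_touch Xa Xb Ya Yb Q).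
Proof.
  intro HQ. unfold touch_formula, fE, fW, rsub. simpl.
  destruct (Req_dec (Yb - Ya) 0) as [HE|HE].
  - replace Yb with Ya by lra. rewrite frame_touch_parallel by exact HQ.
    replace (Ya + - Ya) with 0 by ring. split.
    + intros [[_ H]|[H _]]; [|lra]. destruct H as [H|[[H1 H2]|[H1 H2]]]; [left; exact H|right|right]; lra.
    + intro H. left. split; [reflexivity|]. destruct H as [H|[[H1 H2]|[H1 H2]]]; [left; exact H|right|right]; lra.
  - rewrite frame_touch_transversal by exact HE.
    replace (Yb + - Ya) with (Yb - Ya) by ring.
    replace (Xa * Yb + - (Xb * Ya)) with (Xa * Yb - Xb * Ya) by ring.
    set (E := Yb - Ya) in *. set (W := Xa * Yb - Xb * Ya). set (P := Ya * Yb).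
    split.
    + intros [[H _]|[_ H]]; [contradiction|]. intros HP HW.
      destruct H as [H|[H|[H|[H1 H2]]]]; [lra|lra|lra|split; [|exact H2]].
      destruct H1 as [H1|H1]; [left; exact H1|right; lra].
    + intro H. right. split; [exact HE|].
      destruct (Rle_dec P 0) as [HP|HP]; [|left; lra].
      destruct (Rle_dec 0 (W*E)) as [HW1|HW1]; [|right; left; lra].
      destruct (Rle_dec (W*E) (Q*(E*E))) as [HW2|HW2]; [|right; right; left; lra].
      destruct (H HP (conj HW1 HW2)) as [[H1|H1] H2]; right; right; right; split; auto; right; lra.
Qed.

(** Piecewise polynomial representations of the ingredients of [ord_formula], in
    the variables 0..4 = Xa, Xb, Ya, Yb, Q. *)
Definition pw_lo : pwpoly := pw_max (pw_min (pw_poly (PVar 0)) (pw_poly (PVar 1))) (pw_poly (PConst 0)).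
Definition pw_hi : pwpoly := pw_min (pw_max (pw_poly (PVar 0)) (pw_poly (PVar 1))) (pw_poly (PVar 4)).
Definition pw_len : pwpoly := pw_max (pw_poly (PConst 0)) (pw_map2 rsub pw_hi pw_lo).
Definition pw_det : pwpoly :=
  pw_map2 PMul
    (pw_map2 PAdd (pw_poly (PMul (PMul (PConst 2) (PVar 2)) (rsub (PVar 1) (PVar 0))))
       (pw_map2 PMul (pw_map2 rsub (pw_map2 PAdd pw_lo pw_hi) (pw_poly (PMul (PConst 2) (PVar 0))))
          (pw_poly (rsub (PVar 3) (PVar 2)))))
    (pw_poly (rsub (PVar 1) (PVar 0))).
Definition pw_numerator : pwpoly := pw_map2 PMul (pw_signum pw_det) pw_len.

Lemma pw_lo_ok : represents (fun x => proj_lo (x 0%nat) (x 1%nat)) pw_lo.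
Proof. apply pw_max_ok; [apply pw_min_ok|]; apply pw_poly_ok. Qed.

Lemma pw_hi_ok : represents (fun x => proj_hi (x 0%nat) (x 1%nat) (x 4%nat)) pw_hi.
Proof. apply pw_min_ok; [apply pw_max_ok|]; apply pw_poly_ok. Qed.

Lemma pw_len_ok : represents (fun x => proj_len (x 0%nat) (x 1%nat) (x 4%nat)) pw_len.
Proof.
  apply pw_max_ok; [apply pw_poly_ok|].
  apply (pw_map2_ok rsub Rminus); [reflexivity|apply pw_hi_ok|apply pw_lo_ok].
Qed.

Lemma pw_det_ok : represents (fun x => side_det (x 0%nat) (x 1%nat) (x 2%nat) (x 3%nat) (x 4%nat)) pw_det.
Proof.
  apply (pw_map2_ok PMul Rmult); [reflexivity| |apply pw_poly_ok].
  apply (pw_map2_ok PAdd Rplus); [reflexivity|apply pw_poly_ok|].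
  apply (pw_map2_ok PMul Rmult); [reflexivity| |apply pw_poly_ok].
  apply (pw_map2_ok rsub Rminus); [reflexivity| |apply pw_poly_ok].
  apply (pw_map2_ok PAdd Rplus); [reflexivity|apply pw_lo_ok|apply pw_hi_ok].
Qed.

Lemma pw_numerator_ok : represents (fun x =>
  signum (side_det (x 0%nat) (x 1%nat) (x 2%nat) (x 3%nat) (x 4%nat)) * proj_len (x 0%nat) (x 1%nat) (x 4%nat))
  pw_numerator.
Proof. apply (pw_map2_ok PMul Rmult); [reflexivity|apply pw_signum_ok, pw_det_ok|apply pw_len_ok]. Qed.

(** Division by a square root, expressed polynomially. *)
Lemma eq_div_sqrt y N Q : Q > 0 -> (y = N / sqrt Q <-> y*y*Q - N*N = 0 /\ ~ (-(y*N) > 0)).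
Proof.
  intro HQ. set (s := sqrt Q). assert (Hs : s > 0) by (apply sqrt_lt_R0; lra).
  assert (HQs : Q = s*s) by (unfold s; rewrite sqrt_sqrt; lra). rewrite HQs.
  split.
  - intros ->. split; [field; lra|]. intro H.
    assert (N / s * N = (N*N) * / s) by (field; lra).
    assert (N*N*/s >= 0) by (apply Rle_ge, Rmult_le_pos; [nra|left; apply Rinv_0_lt_compat; lra]). lra.
  - intros [H1 H2]. assert (E : (y*s - N)*(y*s + N) = 0) by (rewrite <- H1; ring).
    apply Rmult_integral in E. destruct E as [E|E].
    + apply Rmult_eq_reg_r with s; [|lra]. field_simplify; lra.
    + assert (HyN : y*N = -(y*y)*s) by (replace N with (-(y*s)) by lra; ring).
      assert (Hyy : y*y*s = 0) by (assert (y*y*s >= 0) by (apply Rle_ge, Rmult_le_pos; nra); lra).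
      assert (Hy : y = 0) by (apply Rmult_integral in Hyy; destruct Hyy; [nra|lra]). subst y. assert (N = 0) by lra. subst N. unfold Rdiv. ring.
Qed.

(** The graph y = ord_formula Xa Xb Ya Yb Q, in the variables 0..5 = Xa, Xb, Ya, Yb, Q, y:
    on each piece of the numerator r, y = r / sqrt Q, and y = 0 when Q = 0. *)
Definition ord_piece (cr : qf * rpoly) : qf :=
  FAnd (fst cr) (FAnd (FEq0 (rsub (PMul (PMul (PVar 5) (PVar 5)) (PVar 4)) (PMul (snd cr) (snd cr))))
                      (FNot (FPos (POpp (PMul (PVar 5) (snd cr)))))).

Definition ord_graph_formula : qf :=
  FOr (FAnd (FEq0 (PVar 4)) (FEq0 (PVar 5))) (FAnd (FPos (PVar 4)) (or_list (map ord_piece pw_numerator))).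

Lemma ord_graph_formula_sem Xa Xb Ya Yb Q y : Q >= 0 ->
  (qeval (frame_env Xa Xb Ya Yb Q y) ord_graph_formula <-> y = ord_formula Xa Xb Ya Yb Q).
Proof.
  intro HQ. set (x := frame_env Xa Xb Ya Yb Q y).
  destruct pw_numerator_ok as [Cover Agree].
  assert (Hpiece : Q > 0 -> forall c r, In (c, r) pw_numerator -> qeval x c ->
            (qeval x (ord_piece (c, r)) <-> y = ord_formula Xa Xb Ya Yb Q)).
  { intros HQ' c r Hin Hc. pose proof (Agree x c r Hin Hc) as Er.
    change (qeval x c /\ y * y * Q + - (peval x r * peval x r) = 0 /\ ~ (- (y * peval x r) > 0)
            <-> y = ord_formula Xa Xb Ya Yb Q).
    rewrite Er. unfold ord_formula. rewrite (eq_div_sqrt y _ Q HQ'). unfold Rminus. tauto. }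
  change ((Q = 0 /\ y = 0) \/ (Q > 0 /\ qeval x (or_list (map ord_piece pw_numerator)))
          <-> y = ord_formula Xa Xb Ya Yb Q).
  rewrite qeval_or_list.
  destruct (Req_dec Q 0) as [HQ0|HQ0].
  - unfold ord_formula. rewrite HQ0, proj_len_zero, sqrt_0. unfold Rdiv. rewrite Rmult_0_r, Rmult_0_l.
    split; [intros [[_ H]|[H _]]; [exact H|lra]|intro H; left; split; auto].
  - assert (HQ' : Q > 0) by lra. split.
    + intros [[H _]|[_ (f & Hin & Hf)]]; [contradiction|].
      apply in_map_iff in Hin. destruct Hin as ([c r] & <- & Hin).
      apply (Hpiece HQ' c r Hin); [apply Hf|exact Hf].
    + intro H. right. split; [exact HQ'|]. destruct (Cover x) as (c & r & Hin & Hc).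
      exists (ord_piece (c, r)). split; [apply in_map_iff; exists (c, r); auto|].
      apply (Hpiece HQ' c r Hin Hc), H.
Qed.

(** * Configurations as points of R^(2n)
    Vertex v has coordinates 2v and 2v+1. *)
Definition cx (v : nat) : rpoly := PVar (2*v)%nat.
Definition cy (v : nat) : rpoly := PVar (2*v+1)%nat.
Definition coords (z : nat -> R) (v : nat) : pt := (z (2*v)%nat, z (2*v+1)%nat).

Definition p_sqlen (u v : nat) : rpoly :=
  PAdd (PMul (rsub (cx v) (cx u)) (rsub (cx v) (cx u))) (PMul (rsub (cy v) (cy u)) (rsub (cy v) (cy u))).
Definition p_frameX (u v w : nat) : rpoly :=
  PAdd (PMul (rsub (cx w) (cx u)) (rsub (cx v) (cx u))) (PMul (rsub (cy w) (cy u)) (rsub (cy v) (cy u))).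
Definition p_frameY (u v w : nat) : rpoly :=
  rsub (PMul (rsub (cx v) (cx u)) (rsub (cy w) (cy u))) (PMul (rsub (cy v) (cy u)) (rsub (cx w) (cx u))).

Lemma peval_p_sqlen z u v : peval z (p_sqlen u v) = sqlen (coords z u) (coords z v).
Proof. unfold p_sqlen, rsub, sqlen, coords, cx, cy; simpl; ring. Qed.

Lemma peval_p_frameX z u v w : peval z (p_frameX u v w) = frameX (coords z u) (coords z v) (coords z w).
Proof. unfold p_frameX, rsub, frameX, coords, cx, cy; simpl; ring. Qed.

Lemma peval_p_frameY z u v w : peval z (p_frameY u v w) = frameY (coords z u) (coords z v) (coords z w).
Proof. unfold p_frameY, rsub, frameY, coords, cx, cy; simpl; ring. Qed.

Definition frame_subst (u1 v1 u2 v2 : nat) (y : rpoly) : nat -> rpoly := fun i =>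
  match i with
  | 0 => p_frameX u1 v1 u2 | 1 => p_frameX u1 v1 v2
  | 2 => p_frameY u1 v1 u2 | 3 => p_frameY u1 v1 v2
  | 4 => p_sqlen u1 v1 | 5 => y | _ => PConst 0 end.

Lemma frame_subst_env z u1 v1 u2 v2 y :
  (fun i => peval z (frame_subst u1 v1 u2 v2 y i)) =
  frame_env (frameX (coords z u1) (coords z v1) (coords z u2)) (frameX (coords z u1) (coords z v1) (coords z v2))
            (frameY (coords z u1) (coords z v1) (coords z u2)) (frameY (coords z u1) (coords z v1) (coords z v2))
            (sqlen (coords z u1) (coords z v1)) (peval z y).
Proof.
  apply functional_extensionality. intros [|[|[|[|[|[|i]]]]]]; unfold frame_subst, frame_env;
    rewrite ?peval_p_frameX, ?peval_p_frameY, ?peval_p_sqlen; reflexivity.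
Qed.

Lemma frame_subst_vars k u1 v1 u2 v2 y :
  (2*u1+1 < k)%nat -> (2*v1+1 < k)%nat -> (2*u2+1 < k)%nat -> (2*v2+1 < k)%nat ->
  pvars_lt k y -> forall i, pvars_lt k (frame_subst u1 v1 u2 v2 y i).
Proof.
  intros H1 H2 H3 H4 Hy [|[|[|[|[|[|i]]]]]];
    unfold frame_subst, p_frameX, p_frameY, p_sqlen, rsub, cx, cy; simpl; auto; repeat split; lia.
Qed.

(** [touch_at_ends] for the bars [u1,v1] and [u2,v2], following [touch_at_ends_cases]. *)
Definition touch_pair_formula (u1 v1 u2 v2 : nat) : qf :=
  FOr (FAnd (FPos (p_sqlen u1 v1)) (qsubst (frame_subst u1 v1 u2 v2 (PConst 0)) touch_formula))
  (FOr (FAnd (FEq0 (p_sqlen u1 v1))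
             (FAnd (FPos (p_sqlen u2 v2)) (qsubst (frame_subst u2 v2 u1 v1 (PConst 0)) touch_formula)))
       (FAnd (FEq0 (p_sqlen u1 v1)) (FEq0 (p_sqlen u2 v2)))).

Lemma touch_pair_formula_sem z u1 v1 u2 v2 : qeval z (touch_pair_formula u1 v1 u2 v2) <->
  touch_at_ends (coords z u1) (coords z v1) (coords z u2) (coords z v2).
Proof.
  unfold touch_pair_formula. cbn [qeval]. rewrite !qeval_subst, !frame_subst_env, !peval_p_sqlen.
  rewrite touch_at_ends_cases. unfold frame_touch_of.
  pose proof (sqlen_nonneg (coords z u1) (coords z v1)). pose proof (sqlen_nonneg (coords z u2) (coords z v2)).
  split; intros [[A B]|[[A [B C]]|[A B]]].
  - left. split; auto. apply touch_formula_sem in B; auto.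
  - right; left. split; [exact A|split; [exact B|]]. apply touch_formula_sem in C; auto.
  - right; right; auto.
  - left. split; auto. apply touch_formula_sem; auto.
  - right; left. split; [exact A|split; [exact B|]]. apply touch_formula_sem; auto.
  - right; right; auto.
Qed.

Lemma touch_pair_formula_vars k u1 v1 u2 v2 :
  (2*u1+1 < k)%nat -> (2*v1+1 < k)%nat -> (2*u2+1 < k)%nat -> (2*v2+1 < k)%nat ->
  qvars_lt k (touch_pair_formula u1 v1 u2 v2).
Proof.
  intros. assert (Hsq : forall u v, (2*u+1 < k)%nat -> (2*v+1 < k)%nat -> pvars_lt k (p_sqlen u v))
    by (intros; unfold p_sqlen, rsub, cx, cy; simpl; repeat split; lia).
  unfold touch_pair_formula. simpl qvars_lt.
  repeat (first [apply qvars_subst; apply frame_subst_vars; simpl; auto | apply Hsq; auto | split]).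
Qed.

Definition src (E : list (nat * nat)) (i : nat) : nat := fst (edge E i).
Definition dst (E : list (nat * nat)) (i : nat) : nat := snd (edge E i).

Definition bar_len (E : list (nat * nat)) (C : nat -> pt) (i : nat) : R :=
  Defs.dist (C (src E i)) (C (dst E i)).

Lemma edge_vertices_lt n E i : simple_graph n E -> (i < length E)%nat ->
  (src E i < n)%nat /\ (dst E i < n)%nat.
Proof.
  intros [_ H] Hi. unfold src, dst, edge.
  destruct (H (fst (nth i E (0%nat,0%nat))) (snd (nth i E (0%nat,0%nat)))) as [A [B _]]; auto.
  rewrite <- surjective_pairing. apply nth_In; auto.
Qed.

Lemma merged_ext E l1 l2 x y : (forall i, (i < length E)%nat -> (l1 i = 0 <-> l2 i = 0)) ->
  merged E l1 x y -> merged E l2 x y.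
Proof.
  intros H Hm. induction Hm as [x y (i & Hi & Hl & Hxy)| |]; [|apply rt_refl|eapply rt_trans; eauto].
  apply rt_step. exists i. split; auto. split; auto. apply H; auto.
Qed.

Lemma nontouching_ext n E l1 l2 C : (forall i, (i < length E)%nat -> (l1 i = 0 <-> l2 i = 0)) ->
  nontouching n E l1 C -> nontouching n E l2 C.
Proof.
  intros H [A B]. split; auto. intros x y Hx Hy. rewrite B; auto.
  split; apply merged_ext; auto. intros i Hi. symmetry. auto.
Qed.

Lemma finite_bound (f : nat -> R) (m : nat) : exists M, 0 <= M /\ forall i, (i < m)%nat -> f i <= M.
Proof.
  induction m as [|m (M & HM & H)]; [exists 0; split; [lra|intros; lia]|].
  exists (Rmax M (f m)). split; [apply Rle_trans with M; auto; apply Rmax_l|].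
  intros i Hi. destruct (Nat.eq_dec i m) as [->|Hne]; [apply Rmax_r|].
  apply Rle_trans with M; [apply H; lia|apply Rmax_l].
Qed.

(** A map lies in some NConf_eps iff it is nontouching for its own bar lengths:
    eps can always be taken as large as the finitely many length changes. *)
Lemma NConf_all_iff n E l C : NConf_all n E l C <-> nontouching n E (bar_len E C) C.
Proof.
  split.
  - intros (eps & Heps & l' & Hnn & Hrel & Hcfg & Hnt). eapply nontouching_ext; [|exact Hnt].
    intros i Hi. unfold bar_len, src, dst. rewrite (Hcfg i Hi). tauto.
  - intro Hnt. destruct (finite_bound (fun i => Rabs (bar_len E C i - l i)) (length E)) as (M & HM & HB).
    exists M. split; auto. exists (bar_len E C). split; [|split; [|split]]; auto.
    + intros. unfold bar_len, Defs.dist. apply sqrt_pos.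
    + intros i Hi. reflexivity.
Qed.

Lemma touch_of_nontouching n E L C i j : nontouching n E L C ->
  (i < length E)%nat -> (j < length E)%nat -> i <> j ->
  touch_at_ends (C (src E i)) (C (dst E i)) (C (src E j)) (C (dst E j)).
Proof. intros [A _] Hi Hj Hij z H1 H2. apply A; auto. Qed.

Lemma AnnotA_closed_form n E L C i j : nontouching n E L C ->
  (i < length E)%nat -> (j < length E)%nat ->
  AnnotA E C i j = if Nat.eqb i j then 0 else ord_of (C (src E i)) (C (dst E i)) (C (src E j)) (C (dst E j)).
Proof.
  intros Hnt Hi Hj. unfold AnnotA, Cseg. destruct (Nat.eqb_spec i j) as [->|Hne]; [apply Ord_self|].
  apply Ord_closed_form. apply (touch_of_nontouching n E L C i j); auto.
Qed.

Lemma finite_min_delta (m : nat) (P : nat -> R -> Prop) :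
  (forall i d d', 0 < d' <= d -> P i d -> P i d') ->
  (forall i, (i < m)%nat -> exists d, d > 0 /\ P i d) -> exists d, d > 0 /\ forall i, (i < m)%nat -> P i d.
Proof.
  intros Hmono. induction m as [|m IH]; intro H; [exists 1; split; [lra|intros; lia]|].
  destruct IH as (d1 & Hd1 & H1); [intros i Hi; apply H; lia|].
  destruct (H m ltac:(lia)) as (d2 & Hd2 & H2).
  exists (Rmin d1 d2). split; [apply Rmin_pos; auto|].
  intros i Hi. destruct (Nat.eq_dec i m) as [->|Hne].
  - apply Hmono with d2; auto. split; [apply Rmin_pos; auto|apply Rmin_r].
  - apply Hmono with d1; [split; [apply Rmin_pos; auto|apply Rmin_l]|]. apply H1. lia.
Qed.

Section AnnotContinuity.
Variables (n : nat) (E : list (nat * nat)) (l : nat -> R) (C : nat -> pt) (e : R).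
Hypothesis HG : simple_graph n E.
Hypothesis HC : NConf_all n E l C.
Hypothesis He : e > 0.

Definition entry_close (i j : nat) (d : R) : Prop := forall C', NConf_all n E l C' ->
  near n d C C' -> Rabs (AnnotA E C' i j - AnnotA E C i j) < e.

Lemma entry_close_mono i j d d' : 0 < d' <= d -> entry_close i j d -> entry_close i j d'.
Proof. intros Hd H C' HC' Hc. apply H; auto. eapply near_mono; [|exact Hc]. lra. Qed.

Lemma entry_continuous i j : (i < length E)%nat -> (j < length E)%nat ->
  exists d, d > 0 /\ entry_close i j d.
Proof.
  intros Hi Hj. pose proof HC as HCnt. apply NConf_all_iff in HCnt.
  destruct (Nat.eq_dec i j) as [<-|Hne].
  - exists 1. split; [lra|]. intros C' HC' _. apply NConf_all_iff in HC'.
    rewrite (AnnotA_closed_form n E _ C' i i HC'), (AnnotA_closed_form n E _ C i i HCnt), Nat.eqb_refl by auto.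
    rewrite Rminus_diag, Rabs_R0. lra.
  - destruct (edge_vertices_lt n E i HG Hi) as [A1 A2]. destruct (edge_vertices_lt n E j HG Hj) as [A3 A4].
    destruct (ord_of_cont n _ _ _ _ A1 A2 A3 A4 C (touch_of_nontouching n E _ C i j HCnt Hi Hj Hne) e He)
      as (d & Hd & H).
    exists d. split; auto. intros C' HC' Hc. apply NConf_all_iff in HC'.
    rewrite (AnnotA_closed_form n E _ C' i j HC'), (AnnotA_closed_form n E _ C i j HCnt) by auto.
    destruct (Nat.eqb_spec i j); [contradiction|]. apply (H C' Hc).
Qed.

Lemma annot_continuous : exists d, d > 0 /\ forall C', NConf_all n E l C' ->
  near n d C C' -> forall i j, (i < length E)%nat -> (j < length E)%nat ->
  Rabs (AnnotA E C' i j - AnnotA E C i j) < e.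
Proof.
  destruct (finite_min_delta (length E) (fun i d => forall j, (j < length E)%nat -> entry_close i j d))
    as (d & Hd & Hall).
  - intros i d d' Hd' H j Hj. apply (entry_close_mono i j d d' Hd'), H, Hj.
  - intros i Hi. apply (finite_min_delta (length E) (entry_close i)).
    + intros j; apply entry_close_mono.
    + intros j Hj. apply entry_continuous; auto.
  - exists d. split; auto. intros C' HC' Hc i j Hi Hj. apply (Hall i Hi j Hj C' HC' Hc).
Qed.
End AnnotContinuity.

(** * Semi-algebraicity of the graph of the annotation map *)

Definition same_point_formula (x y : nat) : qf :=
  FAnd (FEq0 (rsub (cx x) (cx y))) (FEq0 (rsub (cy x) (cy y))).

Definition zero_bar_formula (E : list (nat * nat)) (i : nat) : qf := FEq0 (p_sqlen (src E i) (dst E i)).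

Lemma same_point_formula_sem z x y : qeval z (same_point_formula x y) <-> coords z x = coords z y.
Proof.
  unfold same_point_formula, coords, rsub, cx, cy. simpl. split.
  - intros [A B]. f_equal; lra.
  - intro H. inversion H as [[H1 H2]]. rewrite H1, H2. split; ring.
Qed.

Lemma zero_bar_formula_sem z E i : qeval z (zero_bar_formula E i) <-> bar_len E (coords z) i = 0.
Proof.
  unfold zero_bar_formula, bar_len. cbn [qeval]. rewrite peval_p_sqlen, dist_sqlen.
  pose proof (sqlen_nonneg (coords z (src E i)) (coords z (dst E i))).
  split; intro H0; [rewrite H0; apply sqrt_0|apply sqrt_eq_0; auto].
Qed.

Definition merge_condition (n : nat) (E : list (nat * nat)) (z : nat -> R) : Prop :=
  forall x y, (x < n)%nat -> (y < n)%nat -> (coords z x = coords z y <-> merged E (bar_len E (coords z)) x y).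

Definition merge_atoms (n : nat) (E : list (nat * nat)) : list qf :=
  map (zero_bar_formula E) (seq 0 (length E)) ++
  flat_map (fun x => map (fun y => same_point_formula x y) (seq 0 n)) (seq 0 n).

Lemma merge_condition_atoms n E z z' :
  (forall f, In f (merge_atoms n E) -> (qeval z f <-> qeval z' f)) ->
  merge_condition n E z -> merge_condition n E z'.
Proof.
  intros H HM x y Hx Hy.
  assert (HE : coords z x = coords z y <-> coords z' x = coords z' y).
  { rewrite <- !same_point_formula_sem. apply H. apply in_or_app. right. apply in_flat_map.
    exists x. split; [apply in_seq; lia|]. apply in_map_iff. exists y. split; auto. apply in_seq; lia. }
  assert (HL : forall i, (i < length E)%nat -> (bar_len E (coords z) i = 0 <-> bar_len E (coords z') i = 0)).
  { intros i Hi. rewrite <- !zero_bar_formula_sem. apply H. apply in_or_app. left.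
    apply in_map_iff. exists i. split; auto. apply in_seq; lia. }
  rewrite <- HE, (HM x y Hx Hy). split; apply merged_ext; intros i Hi; [|symmetry]; auto.
Qed.

Lemma merge_condition_definable n E k : simple_graph n E -> (2*n <= k)%nat ->
  exists g, qvars_lt k g /\ forall z, merge_condition n E z <-> qeval z g.
Proof.
  intros HG Hk. apply (qf_definable_by_atoms k (merge_atoms n E)).
  - intros f Hf. apply in_app_or in Hf. destruct Hf as [Hf|Hf].
    + apply in_map_iff in Hf. destruct Hf as (i & <- & Hi). apply in_seq in Hi.
      destruct (edge_vertices_lt n E i HG ltac:(lia)).
      unfold zero_bar_formula, p_sqlen, rsub, cx, cy. simpl. repeat split; lia.
    + apply in_flat_map in Hf. destruct Hf as (x & Hx & Hf). apply in_map_iff in Hf.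
      destruct Hf as (y & <- & Hy). apply in_seq in Hx. apply in_seq in Hy.
      unfold same_point_formula, rsub, cx, cy. simpl. repeat split; lia.
  - intros z z' H. split; apply merge_condition_atoms; auto. intros f Hf. symmetry. auto.
Qed.

Definition all_touch_formula (E : list (nat * nat)) : qf :=
  and_upto (length E) (fun i => and_upto (length E) (fun j =>
    if Nat.eqb i j then fTrue else touch_pair_formula (src E i) (dst E i) (src E j) (dst E j))).

Lemma all_touch_formula_sem z E : qeval z (all_touch_formula E) <->
  forall i j, (i < length E)%nat -> (j < length E)%nat -> i <> j ->
  touch_at_ends (coords z (src E i)) (coords z (dst E i)) (coords z (src E j)) (coords z (dst E j)).
Proof.
  unfold all_touch_formula. rewrite qeval_and_upto. split.
  - intros H i j Hi Hj Hij. specialize (H i Hi). rewrite qeval_and_upto in H. specialize (H j Hj).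
    destruct (Nat.eqb_spec i j); [contradiction|]. apply touch_pair_formula_sem; auto.
  - intros H i Hi. rewrite qeval_and_upto. intros j Hj.
    destruct (Nat.eqb_spec i j); [apply qeval_fTrue|]. apply touch_pair_formula_sem; auto.
Qed.

Definition output_formula (n : nat) : qf :=
  and_upto n (fun v => FAnd (FEq0 (rsub (PVar (2*n+2*v)%nat) (cx v))) (FEq0 (rsub (PVar (2*n+2*v+1)%nat) (cy v)))).

Lemma output_formula_sem z n : qeval z (output_formula n) <-> forall v, (v < n)%nat ->
  z (2 * n + 2 * v)%nat = fst (coords z v) /\ z (2 * n + 2 * v + 1)%nat = snd (coords z v).
Proof.
  unfold output_formula. rewrite qeval_and_upto. unfold coords, rsub, cx, cy. simpl.
  split; intros H v Hv; destruct (H v Hv); split; lra.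
Qed.

Definition annot_formula (n : nat) (E : list (nat * nat)) : qf :=
  and_upto (length E) (fun i => and_upto (length E) (fun j =>
    if Nat.eqb i j then FEq0 (PVar (4*n + i*length E + j)%nat)
    else qsubst (frame_subst (src E i) (dst E i) (src E j) (dst E j) (PVar (4*n + i*length E + j)%nat))
                ord_graph_formula)).

Lemma annot_formula_sem z n E : nontouching n E (bar_len E (coords z)) (coords z) ->
  (qeval z (annot_formula n E) <-> forall i j, (i < length E)%nat -> (j < length E)%nat ->
      z (4 * n + i * length E + j)%nat = AnnotA E (coords z) i j).
Proof.
  intro Hnt.
  assert (Hentry : forall i j, (i < length E)%nat -> (j < length E)%nat ->
    (qeval z (if Nat.eqb i j then FEq0 (PVar (4*n + i*length E + j)%nat)
      else qsubst (frame_subst (src E i) (dst E i) (src E j) (dst E j) (PVar (4*n + i*length E + j)%nat))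
             ord_graph_formula) <->
     z (4 * n + i * length E + j)%nat = AnnotA E (coords z) i j)).
  { intros i j Hi Hj. rewrite (AnnotA_closed_form n E _ (coords z) i j Hnt Hi Hj).
    destruct (Nat.eqb_spec i j); [reflexivity|].
    rewrite qeval_subst, frame_subst_env, ord_graph_formula_sem; [reflexivity|].
    apply Rle_ge, sqlen_nonneg. }
  unfold annot_formula. rewrite qeval_and_upto. split.
  - intros H i j Hi Hj. specialize (H i Hi). rewrite qeval_and_upto in H. apply Hentry; auto.
  - intros H i Hi. rewrite qeval_and_upto. intros j Hj. apply Hentry; auto.
Qed.

Theorem annot_graph_semialgebraic (n : nat) (E : list (nat * nat)) (l : nat -> R) :
  simple_graph n E -> semialgebraic (4 * n + length E * length E) (Annot_graph n E l).
Proof.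
  intro HG. set (k := (4 * n + length E * length E)%nat).
  assert (Hv : forall i, (i < length E)%nat -> (src E i < n)%nat /\ (dst E i < n)%nat)
    by (intros; apply edge_vertices_lt; auto).
  destruct (merge_condition_definable n E k HG ltac:(unfold k; lia)) as (gm & Hgmv & Hgm).
  exists (FAnd (all_touch_formula E) (FAnd gm (FAnd (output_formula n) (annot_formula n E)))). split.
  - simpl. split; [|split; [exact Hgmv|split]].
    + apply qvars_and_upto. intros i Hi. apply qvars_and_upto. intros j Hj.
      destruct (Hv i Hi), (Hv j Hj).
      destruct (Nat.eqb i j); [simpl; auto|]. apply touch_pair_formula_vars; unfold k; lia.
    + apply qvars_and_upto. intros v Hvn. unfold rsub, cx, cy. simpl. unfold k. repeat split; lia.
    + apply qvars_and_upto. intros i Hi. apply qvars_and_upto. intros j Hj.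
      destruct (Hv i Hi), (Hv j Hj).
      assert (Hk : (4 * n + i * length E + j < k)%nat) by (unfold k; nia).
      destruct (Nat.eqb i j); [simpl; auto|].
      apply qvars_subst, frame_subst_vars; simpl; unfold k in *; lia.
  - intro z. unfold Annot_graph. cbv zeta.
    change (fun v => (z (2 * v)%nat, z (2 * v + 1)%nat)) with (coords z).
    rewrite NConf_all_iff. cbn [qeval]. rewrite all_touch_formula_sem, <- Hgm, output_formula_sem.
    split.
    + intros [[Htouch Hmerge] [Hout Hannot]].
      split; [intros i j Hi Hj Hij; apply (touch_of_nontouching n E _ _ i j (conj Htouch Hmerge)); auto|].
      split; [exact Hmerge|split; [exact Hout|]]. apply annot_formula_sem; [split|]; auto.
    + intros [Htouch [Hmerge [Hout Hannot]]].
      assert (Hnt : nontouching n E (bar_len E (coords z)) (coords z)).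
      { split; [|exact Hmerge]. intros i j w Hi Hj Hij H1 H2. apply (Htouch i j Hi Hj Hij w H1 H2). }
      split; [exact Hnt|split; [exact Hout|]]. apply annot_formula_sem; auto.
Qed.

Theorem mainTheorem2 (n : nat) (E : list (nat * nat)) (l : nat -> R)
  (HG : simple_graph n E) (Hl : forall i, (i < length E)%nat -> 0 <= l i) :
  (* injective on the union of NConf_eps, eps >= 0 *)
  (forall C C' : nat -> pt, NConf_all n E l C -> NConf_all n E l C' ->
     (forall v, (v < n)%nat -> C v = C' v) ->
     (forall i j, (i < length E)%nat -> (j < length E)%nat -> AnnotA E C i j = AnnotA E C' i j) ->
     forall v, (v < n)%nat -> C v = C' v) /\
  (* semi-algebraic: its graph is a semi-algebraic subset of R^(4n + m^2) *)
  semialgebraic (4 * n + length E * length E) (Annot_graph n E l) /\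
  (* continuous on that set *)
  (forall C, NConf_all n E l C -> forall e, e > 0 -> exists d, d > 0 /\
     forall C', NConf_all n E l C' ->
       (forall v, (v < n)%nat -> Rabs (fst (C' v) - fst (C v)) < d /\ Rabs (snd (C' v) - snd (C v)) < d) ->
       (forall v, (v < n)%nat -> Rabs (fst (C' v) - fst (C v)) < e /\ Rabs (snd (C' v) - snd (C v)) < e) /\
       (forall i j, (i < length E)%nat -> (j < length E)%nat ->
          Rabs (AnnotA E C' i j - AnnotA E C i j) < e)).
Proof.
  split; [|split].
  - (* Annot records the configuration itself *)
    intros C C' _ _ Hsame _. exact Hsame.
  - apply annot_graph_semialgebraic, HG.
  - intros C HC e He.
    destruct (annot_continuous n E l C e HG HC He) as (d & Hd & Hannot).
    exists (Rmin d e). split; [apply Rmin_pos; lra|]. intros C' HC' Hnear. split.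
    + intros v Hv. destruct (Hnear v Hv). pose proof (Rmin_r d e). split; lra.
    + apply (Hannot C' HC'). eapply near_mono; [apply Rmin_l|exact Hnear].
Qed.
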